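(* For every $k\in\{2,3,\dots\}\cup\{\infty\}$, the map $\overline s:\overline{\Omega}_k\to\overline s(\overline{\Omega}_k)$, $\overline s(\overline\gamma)=s(\gamma)$, is a homeomorphism from $(\overline{\Omega}_k,\rho_k)$ onto its image, where the image is a subset of $\{0,1,\dots,2k-3\}^{\mathbb{Z}}$ if $k<\infty$ and of $\Theta_\infty$ if $k=\infty$, equipped with the metric $d(x,y)=\sum_{j\in\mathbb{Z}}|x_j-y_j|/2^{|j|}$.
   Context: PSVF conventions: switching manifold $\Sigma=\{y=0\}$; a PSVF $Z=(X,Y)$ uses $X$ on $\{y\ge0\}$, $Y$ on $\{y\le0\}$; trajectories follow the Filippov convention (off $\Sigma$ follow $X$ or $Y$; at crossing points, where the second components of $X$ and $Y$ have the same nonzero sign, pass through; at a regular tangency, i.e. a point of $\Sigma$ where a field is tangent to $\Sigma$ and which is not an invisible tangency of both fields, continue backward and forward along any of the flows of $X$, $Y$ or the sliding field); a global trajectory is a map $\gamma:\mathbb{R}\to\mathbb{R}^2$ which is a bi-infinite orientation-preserving concatenation of such local trajectories on intervals $[t_i,t_{i+1}]$ with $t_i\to\pm\infty$. Finite $k\ge2$: $P_k(x)=-\left(x+\frac{k-1}{2}\right)\left(x-\frac{k-1}{2}\right)\prod_{i=1}^{k-1}\left(x-\left(i-\frac k2\right)\right)^2$, $r_0=\frac{1-k}{2}$, $r_1=\frac{k-1}{2}$, $p_j=j-\frac k2$ ($j=1,\dots,k-1$), $Z_k$: $(1,P_k'(x))$ on $y\ge0$, $(-1,P_k'(x))$ on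 $y\le0$; $\Lambda_k=\{(x,\pm P_k(x)):r_0\le x\le r_1\}$; arcs $I_0=\{(x,\pm P_k(x)):r_0\le x<p_1\}$, $I_{2j-1}=\{(x,P_k(x)):p_j<x<p_{j+1}\}$, $I_{2j}=\{(x,-P_k(x)):p_j<x<p_{j+1}\}$ ($j=1,\dots,k-2$), $I_{2k-3}=\{(x,\pm P_k(x)):p_{k-1}<x\le r_1\}$. Case $k=\infty$: $p_j=j$ ($j\in\mathbb{Z}$), $Z_\infty$: $(1,2\sin(2\pi x))$ on $y\ge0$, $(-1,2\sin(2\pi x))$ on $y\le0$; $P_\infty(x)=\frac{1-\cos(2\pi x)}{\pi}$, $\Lambda_\infty=\{(x,\pm P_\infty(x)):x\in\mathbb{R}\}$; arcs $I_{2j}=\{(x,P_\infty(x)):j<x<j+1\}$, $I_{2j+1}=\{(x,-P_\infty(x)):j<x<j+1\}$; $\Theta_\infty=\{(x_j)_{j\in\mathbb{Z}}:x_j\in\mathbb{Z},|x_{j+1}-x_j|\le2\ \forall j\}$. In both cases: $\Omega_k$ is the set of global trajectories $\gamma$ of $Z_k$ with $\gamma(0)\in\Lambda_k$; the itinerary $s(\gamma)=(s_j(\gamma))_{j\in\mathbb{Z}}$ has $s_j(\gamma)=n$ if $\gamma(j)\in I_n$ and $s_j(\gamma)=m$ if $\gamma(j)=(p_l,0)$ for some $l$ and $\gamma(j+\frac12)\in I_m$; $\gamma_1\sim\gamma_2$ iff $s(\gamma_1)=s(\gamma_2)$, $\overline\Omega_k=\Omega_k/\sim$. Each class has a representative $\gamma^*$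 with $\gamma^*(0)\in\{(p_l,0)\}$; $\rho_k(\overline\gamma_1,\overline\gamma_2)=\sum_{i\in\mathbb{Z}}2^{-|i|}d_H(\gamma_1^*([i,i+1]),\gamma_2^*([i,i+1]))$, $d_H$ the Hausdorff distance, $\gamma_i^*$ such representatives. *)

From Stdlib Require Import Reals Lra ZArith List ClassicalEpsilon.
From Coquelicot Require Import Coquelicot.

Open Scope R_scope.

Definition pt := (R * R)%type.
Definition vf := pt -> pt.

Definition edist (a b : pt) : R :=
  sqrt ((fst a - fst b) ^ 2 + (snd a - snd b) ^ 2).

Definition follows (F : vf) (g : R -> pt) (t : R) : Prop :=
  is_derive (fun s => fst (g s)) t (fst (F (g t))) /\
  is_derive (fun s => snd (g s)) t (snd (F (g t))).

(** Filippov sliding vector field (convex combination tangent to y = 0) *)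
Definition sliding_field (X Y : vf) (z : pt) : pt :=
  let x2 := snd (X z) in let y2 := snd (Y z) in
  ((y2 * fst (X z) - x2 * fst (Y z)) / (y2 - x2),
   (y2 * snd (X z) - x2 * snd (Y z)) / (y2 - x2)).

Definition local_traj (X Y : vf) (g : R -> pt) (a b : R) : Prop :=
  ((forall t, a <= t <= b -> 0 <= snd (g t)) /\
   (forall t, a < t < b -> follows X g t))
  \/
  ((forall t, a <= t <= b -> snd (g t) <= 0) /\
   (forall t, a < t < b -> follows Y g t))
  \/
  ((forall t, a <= t <= b -> snd (g t) = 0) /\
   (forall t, a < t < b ->
      snd (X (g t)) * snd (Y (g t)) < 0 /\ follows (sliding_field X Y) g t)).

Definition global_traj (X Y : vf) (g : R -> pt) : Prop :=
  (forall t, continuous (fun s => fst (g s)) t /\ continuous (fun s => snd (g s)) t) /\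
  exists tt : Z -> R,
    (forall i, tt i < tt (i + 1)%Z) /\
    (forall M, exists i, M < tt i) /\
    (forall M, exists i, tt i < M) /\
    (forall i, local_traj X Y g (tt i) (tt (i + 1)%Z)).

Definition Omega (X Y : vf) (Lam : pt -> Prop) (g : R -> pt) : Prop :=
  global_traj X Y g /\ Lam (g 0).

(** itinerary relation: arcs I n, tangency abscissae P (the points (p_l,0)) *)
Definition is_itin (I : Z -> pt -> Prop) (P : R -> Prop) (g : R -> pt)
  (s : Z -> Z) : Prop :=
  forall j : Z,
    I (s j) (g (IZR j)) \/
    (exists x, P x /\ g (IZR j) = (x, 0) /\ I (s j) (g (IZR j + / 2))).

Definition itin (I : Z -> pt -> Prop) (P : R -> Prop) (g : R -> pt) : Z -> Z :=
  epsilon (inhabits (fun _ : Z => 0%Z)) (is_itin I P g).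

Definition rep (X Y : vf) (Lam : pt -> Prop) (I : Z -> pt -> Prop) (P : R -> Prop)
  (g : R -> pt) : R -> pt :=
  epsilon (inhabits (fun _ : R => (0, 0)))
    (fun h => Omega X Y Lam h /\ (forall j, itin I P h j = itin I P g j) /\
              exists x, P x /\ h 0 = (x, 0)).

Definition zsum (a : Z -> R) : R :=
  Series (fun n : nat => if Nat.eqb n 0 then a 0%Z
                         else a (Z.of_nat n) + a (- Z.of_nat n)%Z).

Definition pdist (a : pt) (B : pt -> Prop) : R :=
  real (Glb_Rbar (fun r => exists b, B b /\ r = edist a b)).
Definition hdist (A B : pt -> Prop) : R :=
  Rmax (real (Lub_Rbar (fun r => exists a, A a /\ r = pdist a B)))
       (real (Lub_Rbar (fun r => exists b, B b /\ r = pdist b A))).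

Definition seg (g : R -> pt) (i : Z) : pt -> Prop :=
  fun z => exists t, IZR i <= t <= IZR i + 1 /\ z = g t.

(** the metric rho on classes, computed on the representatives *)
Definition rho (X Y : vf) (Lam : pt -> Prop) (I : Z -> pt -> Prop) (P : R -> Prop)
  (g1 g2 : R -> pt) : R :=
  zsum (fun i => (/ 2) ^ (Z.abs_nat i) *
                 hdist (seg (rep X Y Lam I P g1) i) (seg (rep X Y Lam I P g2) i)).

Definition dseq (x y : Z -> Z) : R :=
  zsum (fun j => IZR (Z.abs (x j - y j)) * (/ 2) ^ (Z.abs_nat j)).

(** s-bar : (Omega-bar, rho) -> (s(Omega-bar), d) is a homeomorphism onto its
    image (which lies in target).  s-bar is injective by definition of ~; a class
    is represented by any of its members g in Omega. *)
Definition itinerary_homeo (X Y : vf) (Lam : pt -> Prop) (I : Z -> pt -> Prop)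
  (P : R -> Prop) (target : (Z -> Z) -> Prop) : Prop :=
  (forall g, Omega X Y Lam g -> is_itin I P g (itin I P g) /\ target (itin I P g))
  /\
  (forall g1, Omega X Y Lam g1 -> forall eps, 0 < eps -> exists del, 0 < del /\
     forall g2, Omega X Y Lam g2 -> rho X Y Lam I P g1 g2 < del ->
       dseq (itin I P g1) (itin I P g2) < eps)
  /\
  (forall g1, Omega X Y Lam g1 -> forall eps, 0 < eps -> exists del, 0 < del /\
     forall g2, Omega X Y Lam g2 -> dseq (itin I P g1) (itin I P g2) < del ->
       rho X Y Lam I P g1 g2 < eps).

Definition Pk (k : nat) (x : R) : R :=
  - (x + (INR k - 1) / 2) * (x - (INR k - 1) / 2) *
  fold_right Rmult 1 (map (fun i => (x - (INR i - INR k / 2)) ^ 2) (seq 1 (k - 1))).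

Definition r0k (k : nat) : R := (1 - INR k) / 2.
Definition r1k (k : nat) : R := (INR k - 1) / 2.
Definition pk (k : nat) (j : Z) : R := IZR j - INR k / 2.

Definition Xk (k : nat) : vf := fun z => (1, Derive (Pk k) (fst z)).
Definition Yk (k : nat) : vf := fun z => (-1, Derive (Pk k) (fst z)).

Definition Lamk (k : nat) (z : pt) : Prop :=
  r0k k <= fst z <= r1k k /\ (snd z = Pk k (fst z) \/ snd z = - Pk k (fst z)).

Definition Ik (k : nat) (n : Z) (z : pt) : Prop :=
  let x := fst z in let y := snd z in let K := Z.of_nat k in
  (n = 0%Z /\ r0k k <= x < pk k 1 /\ (y = Pk k x \/ y = - Pk k x))
  \/ (n = (2 * K - 3)%Z /\ pk k (K - 1) < x <= r1k k /\ (y = Pk k x \/ y = - Pk k x))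
  \/ (exists j : Z, (1 <= j <= K - 2)%Z /\ n = (2 * j - 1)%Z /\
        pk k j < x < pk k (j + 1) /\ y = Pk k x)
  \/ (exists j : Z, (1 <= j <= K - 2)%Z /\ n = (2 * j)%Z /\
        pk k j < x < pk k (j + 1) /\ y = - Pk k x).

Definition Psetk (k : nat) (x : R) : Prop :=
  exists l : Z, (1 <= l <= Z.of_nat k - 1)%Z /\ x = pk k l.

Definition targetk (k : nat) (s : Z -> Z) : Prop :=
  forall j, (0 <= s j <= 2 * Z.of_nat k - 3)%Z.

Definition Pinf (x : R) : R := (1 - cos (2 * PI * x)) / PI.
Definition Xinf : vf := fun z => (1, 2 * sin (2 * PI * fst z)).
Definition Yinf : vf := fun z => (-1, 2 * sin (2 * PI * fst z)).

Definition Laminf (z : pt) : Prop :=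
  snd z = Pinf (fst z) \/ snd z = - Pinf (fst z).

Definition Iinf (n : Z) (z : pt) : Prop :=
  let x := fst z in let y := snd z in
  exists j : Z,
    (n = (2 * j)%Z /\ IZR j < x < IZR j + 1 /\ y = Pinf x) \/
    (n = (2 * j + 1)%Z /\ IZR j < x < IZR j + 1 /\ y = - Pinf x).

Definition Psetinf (x : R) : Prop := exists l : Z, x = IZR l.

Definition Thetainf (s : Z -> Z) : Prop :=
  forall j, (Z.abs (s (j + 1) - s j) <= 2)%Z.

(* Along an X-arc x grows at unit speed and
   y - P(x) is constant, along a Y-arc x decreases at unit speed and y + P(x) is constant, and no
   sliding occurs since X and Y have the same vertical component. Hence a trajectory through
   Lambda = {|y| = P(x) >= 0} stays on Lambda, runs right on the upper branch and left on the
   lower one, can switch only where P vanishes, and meets a tangency point (p_l, 0) exactly at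
   times spaced by 1. In between it runs, in unit time, along the closure C_n of one of the arcs
   I_n. So the representative g* of a class satisfies g*([i, i+1]) = C_(s_i), and rho is the
   weighted sum of the d_H(C_(s_i), C_(s'_i)). Each of these lies between two constant multiples
   of |s_i - s'_i| (for k = oo, distinct cells lie in unit columns about |n - m|/2 apart), so rho
   and d are bi-Lipschitz equivalent on the image of the itinerary map. *)

From Stdlib Require Import Reals Lra Lia ZArith List.
From Stdlib Require Import ClassicalEpsilon FunctionalExtensionality PropExtensionality.
From Coquelicot Require Import Coquelicot.
Open Scope R_scope.

Lemma IZR_lt_succ a b : IZR a < IZR b + 1 -> (a <= b)%Z.
Proof. intros H. rewrite <- (plus_IZR b 1) in H. apply lt_IZR in H. lia. Qed.

Lemma Z_div_mod_2 q r : (0 <= r < 2)%Z -> ((2 * q + r) / 2 = q /\ (2 * q + r) mod 2 = r)%Z.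
Proof.
  intros H. split; symmetry; [apply (Z.div_unique _ _ _ r) | apply (Z.mod_unique _ _ q)]; lia.
Qed.

(** * Global trajectories *)

Lemma derive_zero_const (f : R -> R) a b :
  (forall x, a <= x <= b -> continuous f x) ->
  (forall x, a < x < b -> is_derive f x 0) ->
  forall t, a <= t <= b -> f t = f a.
Proof.
  intros Hc Hd t Ht.
  destruct (Req_dec t a) as [->|Hne]; [reflexivity|].
  destruct (MVT_gen f a t (fun _ => 0)) as [c [_ Hc2]].
  - intros x Hx. rewrite Rmin_left, Rmax_right in Hx by lra. apply Hd; lra.
  - intros x Hx. rewrite Rmin_left, Rmax_right in Hx by lra.
    apply continuity_pt_filterlim, Hc; lra.
  - lra.
Qed.

Lemma pair_eq (z : pt) x y : fst z = x -> snd z = y -> z = (x, y).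
Proof. intros <- <-. apply surjective_pairing. Qed.

Lemma fun_eq (g : R -> pt) s t : s = t -> g s = g t.
Proof. intros ->; reflexivity. Qed.

Definition cont_path (g : R -> pt) : Prop :=
  forall t, continuous (fun s => fst (g s)) t /\ continuous (fun s => snd (g s)) t.

Definition time_grid (tt : Z -> R) : Prop :=
  (forall i, tt i < tt (i + 1)%Z) /\ (forall M, exists i, M < tt i) /\
  (forall M, exists i, tt i < M).

Lemma time_grid_le tt : time_grid tt -> forall i j, (i <= j)%Z -> tt i <= tt j.
Proof.
  intros [Hinc _] i. apply Z.le_ind.
  - intros ? ? ->; reflexivity.
  - lra.
  - intros j _ IH. specialize (Hinc j). unfold Z.succ. lra.
Qed.

Lemma time_grid_cell tt : time_grid tt -> forall t, exists i, tt i <= t < tt (i + 1)%Z.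
Proof.
  intros Htt t. pose proof Htt as [_ [Hup Hdown]].
  destruct (Hdown t) as [i1 Hi1], (Hup t) as [i2 Hi2].
  assert (Hle : (i1 <= i2)%Z).
  { destruct (Z_le_gt_dec i1 i2) as [|Hgt]; [assumption|].
    pose proof (time_grid_le tt Htt i2 i1 ltac:(lia)). lra. }
  revert i2 Hle Hi2.
  apply (Z.le_ind (fun j => t < tt j -> exists i, tt i <= t < tt (i + 1)%Z)).
  - intros ? ? ->; reflexivity.
  - lra.
  - intros j _ IH Hj. destruct (Rlt_le_dec t (tt j)) as [Hlt|Hge]; [exact (IH Hlt)|].
    exists j. split; assumption.
Qed.

Lemma global_traj_grid X Y g : global_traj X Y g ->
  exists tt, time_grid tt /\ forall i, local_traj X Y g (tt i) (tt (i + 1)%Z).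
Proof. intros [_ [tt [H1 [H2 [H3 H4]]]]]. exists tt. repeat split; assumption. Qed.

Lemma is_derive_shift (f : R -> R) x c l : is_derive f (x + c) l ->
  is_derive (fun s => f (s + c)) x l.
Proof.
  intros H. replace l with (scal 1 l) by (unfold scal; simpl; unfold mult; simpl; ring).
  apply (is_derive_comp f (fun s => s + c)); [exact H|]. auto_derive; auto; ring.
Qed.

Lemma follows_shift F g t c : follows F g (t + c) -> follows F (fun s => g (s + c)) t.
Proof.
  intros [H1 H2]. split.
  - apply (is_derive_shift (fun s => fst (g s))), H1.
  - apply (is_derive_shift (fun s => snd (g s))), H2.
Qed.

Lemma global_traj_shift X Y g c : global_traj X Y g -> global_traj X Y (fun t => g (t + c)).
Proof.
  intros [Hc [tt [H1 [H2 [H3 H4]]]]]. split.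
  - intros t. assert (Hsh : continuous (fun s : R => s + c) t)
      by (apply (@ex_derive_continuous R_AbsRing R_NormedModule); auto_derive; auto).
    split; [apply (continuous_comp (fun s : R => s + c) (fun s => fst (g s)))
           |apply (continuous_comp (fun s : R => s + c) (fun s => snd (g s)))];
      auto; apply Hc.
  - exists (fun i => tt i - c). split; [|split; [|split]].
    + intros i. specialize (H1 i). lra.
    + intros M. destruct (H2 (M + c)) as [i Hi]. exists i. lra.
    + intros M. destruct (H3 (M + c)) as [i Hi]. exists i. lra.
    + intros i. destruct (H4 i) as [[Ha Hb]|[[Ha Hb]|[Ha Hb]]]; [left | right; left | right; right];
        (split; intros t Ht; [apply Ha; lra|]).
      * apply follows_shift, Hb. lra.
      * apply follows_shift, Hb. lra.
      * destruct (Hb (t + c) ltac:(lra)). split; [assumption | apply follows_shift; assumption].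
Qed.

(** * The fields (1, P') and (-1, P') *)

Section PlusMinusFields.
Variables P D : R -> R.
Hypothesis P_derive : forall x, is_derive P x (D x).

(* [pm_field 1] and [pm_field (-1)] are X = (1, P') and Y = (-1, P'); an [arc] is a
   non-sliding local trajectory, the only kind these fields admit. *)
Definition pm_field (sg : R) : vf := fun z => (sg, D (fst z)).

Definition arc (sg : R) (g : R -> pt) (a b : R) : Prop :=
  (forall t, a <= t <= b -> 0 <= sg * snd (g t)) /\
  (forall t, a < t < b -> follows (pm_field sg) g t).

Definition on_graph (z : pt) : Prop :=
  0 <= P (fst z) /\ (snd z = P (fst z) \/ snd z = - P (fst z)).

Definition on_branch (sg x0 t0 : R) (g : R -> pt) (t : R) : Prop :=
  fst (g t) = x0 + sg * (t - t0) /\ snd (g t) = sg * P (fst (g t)).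

Definition heads (sg : R) (g : R -> pt) (t0 : R) : Prop :=
  exists b, t0 < b /\ arc sg g t0 b.

Local Notation pm_traj := (global_traj (pm_field 1) (pm_field (-1))).

Lemma local_traj_arc g a b : a < b -> local_traj (pm_field 1) (pm_field (-1)) g a b ->
  exists sg, (sg = 1 \/ sg = -1) /\ arc sg g a b.
Proof.
  intros Hab [[Hs Hf]|[[Hs Hf]|[_ Hsl]]].
  - exists 1. split; [left; reflexivity|].
    split; [intros t Ht; specialize (Hs t Ht); lra | exact Hf].
  - exists (-1). split; [right; reflexivity|].
    split; [intros t Ht; specialize (Hs t Ht); lra | exact Hf].
  - exfalso. destruct (Hsl ((a + b) / 2)) as [Hneg _]; [lra|]. simpl in Hneg. nra.
Qed.

Lemma arc_invariants sg g a b : sg * sg = 1 -> cont_path g -> arc sg g a b ->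
  forall t1 t, a <= t1 <= b -> a <= t <= b ->
  fst (g t) - sg * t = fst (g t1) - sg * t1 /\
  snd (g t) - sg * P (fst (g t)) = snd (g t1) - sg * P (fst (g t1)).
Proof.
  intros Hsg Hc [_ Hf].
  assert (Hx : forall t, a <= t <= b -> fst (g t) - sg * t = fst (g a) - sg * a).
  { apply (derive_zero_const (fun s => fst (g s) - sg * s)).
    - intros x _. apply (continuous_minus (fun s => fst (g s)) (fun s => sg * s)).
      + apply Hc.
      + apply (continuous_scal_r sg (fun s : R => s)), continuous_id.
    - intros x Hxab. destruct (Hf x Hxab) as [H1 _].
      replace 0 with (minus sg (scal sg 1))
        by (unfold minus, plus, opp, scal; simpl; unfold mult; simpl; ring).
      apply (is_derive_minus (fun s => fst (g s)) (fun s => scal sg s)); [exact H1|].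
      apply is_derive_scal, (@is_derive_id R_AbsRing). }
  (* d/dt (y - sg P(x)) = P'(x) - sg * sg * P'(x) = 0 *)
  assert (Hy : forall t, a <= t <= b ->
            snd (g t) - sg * P (fst (g t)) = snd (g a) - sg * P (fst (g a))).
  { apply (derive_zero_const (fun s => snd (g s) - sg * P (fst (g s)))).
    - intros x _. apply (continuous_minus (fun s => snd (g s)) (fun s => sg * P (fst (g s)))).
      + apply Hc.
      + apply (continuous_scal_r sg (fun s => P (fst (g s)))), continuous_comp; [apply Hc|].
        apply ex_derive_continuous. eexists. apply P_derive.
    - intros x Hxab. destruct (Hf x Hxab) as [H1 H2].
      replace 0 with (minus (D (fst (g x))) (scal sg (scal sg (D (fst (g x))))))
        by (unfold minus, plus, opp, scal; simpl; unfold mult; simpl;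
            rewrite <- Rmult_assoc, Hsg; ring).
      apply (is_derive_minus (fun s => snd (g s)) (fun s => scal sg (P (fst (g s)))));
        [exact H2|].
      apply is_derive_scal, (is_derive_comp P (fun s => fst (g s))); [apply P_derive|exact H1]. }
  intros t1 t Ht1 Ht. specialize (Hx t1 Ht1) as Hx1. specialize (Hy t1 Ht1) as Hy1.
  specialize (Hx t Ht). specialize (Hy t Ht). split; lra.
Qed.

Lemma arc_on_graph sg g a b : sg = 1 \/ sg = -1 -> cont_path g -> arc sg g a b ->
  forall t1 t, a <= t1 <= b -> a <= t <= b -> on_graph (g t1) -> on_graph (g t).
Proof.
  intros Hsg Hc Harc t1 t Ht1 Ht [HP1 Hy1].
  assert (Hsq : sg * sg = 1) by (destruct Hsg as [-> | ->]; ring).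
  destruct (arc_invariants sg g a b Hsq Hc Harc t1 t Ht1 Ht) as [_ Hinv].
  pose proof (proj1 Harc t1 Ht1). pose proof (proj1 Harc t Ht).
  destruct Hsg as [-> | ->]; [split; [|left] | split; [|right]]; destruct Hy1; lra.
Qed.

Lemma arc_on_branch sg x0 t0 g a b : sg * sg = 1 -> cont_path g -> arc sg g a b ->
  forall t1, a <= t1 <= b -> on_branch sg x0 t0 g t1 ->
  forall t, a <= t <= b -> on_branch sg x0 t0 g t.
Proof.
  intros Hsq Hc Harc t1 Ht1 [E1 E2] t Ht.
  destruct (arc_invariants sg g a b Hsq Hc Harc t1 t Ht1 Ht) as [I1 I2].
  split; lra.
Qed.

Lemma arc_direction sg sg' g a b t1 : sg = 1 \/ sg = -1 -> sg' = 1 \/ sg' = -1 ->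
  arc sg' g a b -> a <= t1 <= b -> snd (g t1) = sg * P (fst (g t1)) -> 0 < P (fst (g t1)) ->
  sg' = sg.
Proof.
  intros Hsg Hsg' Harc Ht1 Hy HP. pose proof (proj1 Harc t1 Ht1) as Hs. rewrite Hy in Hs.
  destruct Hsg as [-> | ->], Hsg' as [-> | ->]; lra.
Qed.

Lemma traj_on_graph g : pm_traj g -> on_graph (g 0) -> forall t, on_graph (g t).
Proof.
  intros Hg H0. pose proof (proj1 Hg) as Hc.
  destruct (global_traj_grid _ _ g Hg) as [tt [Htt Hloc]].
  pose proof (proj1 Htt) as Hinc.
  set (piece_on_graph i := forall t, tt i <= t <= tt (i + 1)%Z -> on_graph (g t)).
  assert (Hpiece : forall i t1, tt i <= t1 <= tt (i + 1)%Z -> on_graph (g t1) ->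
                     piece_on_graph i).
  { intros i t1 Ht1 Hon t Ht.
    destruct (local_traj_arc g _ _ (Hinc i) (Hloc i)) as [sg [Hsg Ha]].
    exact (arc_on_graph sg g _ _ Hsg Hc Ha t1 t Ht1 Ht Hon). }
  destruct (time_grid_cell tt Htt 0) as [i0 Hi0].
  assert (Hall : forall j, piece_on_graph (i0 + j)%Z).
  { apply Z.peano_ind.
    - rewrite Z.add_0_r. apply (Hpiece i0 0); [lra | assumption].
    - intros j IH. replace (i0 + Z.succ j)%Z with (i0 + j + 1)%Z by lia.
      pose proof (Hinc (i0 + j)%Z). pose proof (Hinc (i0 + j + 1)%Z).
      apply (Hpiece _ (tt (i0 + j + 1)%Z)); [lra|]. apply IH. lra.
    - intros j IH. replace (i0 + Z.pred j)%Z with (i0 + j - 1)%Z by lia.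
      assert (E : (i0 + j - 1 + 1 = i0 + j)%Z) by lia.
      pose proof (Hinc (i0 + j - 1)%Z) as H1. rewrite E in H1. pose proof (Hinc (i0 + j)%Z).
      apply (Hpiece _ (tt (i0 + j)%Z)); [rewrite E; lra|]. apply IH. lra. }
  intros t. destruct (time_grid_cell tt Htt t) as [i Hi].
  specialize (Hall (i - i0)%Z). replace (i0 + (i - i0))%Z with i in Hall by lia.
  apply Hall. lra.
Qed.

Lemma traj_heads g : pm_traj g -> forall t0, heads 1 g t0 \/ heads (-1) g t0.
Proof.
  intros Hg t0. destruct (global_traj_grid _ _ g Hg) as [tt [Htt Hloc]].
  destruct (time_grid_cell tt Htt t0) as [i Hi].
  destruct (local_traj_arc g _ _ (proj1 Htt i) (Hloc i)) as [sg [[-> | ->] [Hs Hf]]];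
    [left | right]; exists (tt (i + 1)%Z);
    (split; [lra|]); split; intros t Ht; [apply Hs | apply Hf | apply Hs | apply Hf]; lra.
Qed.

Lemma heads_sign sg g t0 : heads sg g t0 -> 0 <= sg * snd (g t0).
Proof. intros [b [Hb [Hs _]]]. apply Hs. lra. Qed.

Lemma heads_blocked sg g t0 x0 : sg = 1 \/ sg = -1 -> cont_path g -> heads sg g t0 ->
  g t0 = (x0, 0) -> P x0 = 0 -> (forall s, 0 < s -> P (x0 + sg * s) < 0) -> False.
Proof.
  intros Hsg Hc [b [Hb Harc]] Hg0 HP0 Hneg.
  assert (Hsq : sg * sg = 1) by (destruct Hsg as [-> | ->]; ring).
  set (t := (t0 + b) / 2).
  destruct (arc_invariants sg g t0 b Hsq Hc Harc t0 t ltac:(unfold t; lra) ltac:(unfold t; lra))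
    as [Hx Hy].
  pose proof (proj1 Harc t ltac:(unfold t; lra)) as Hs.
  rewrite Hg0 in Hx, Hy. simpl in Hx, Hy.
  assert (Hfx : fst (g t) = x0 + sg * (t - t0)) by lra. rewrite Hfx in Hy.
  pose proof (Hneg (t - t0) ltac:(unfold t; lra)).
  destruct Hsg as [-> | ->]; lra.
Qed.

(* Induction along the time grid: while P > 0, the sign condition forces every arc to keep
   the direction sg (arc_direction). *)
Lemma traj_follows sg g t0 x0 L : sg = 1 \/ sg = -1 -> pm_traj g -> heads sg g t0 ->
  g t0 = (x0, sg * P x0) -> (forall s, 0 < s < L -> 0 < P (x0 + sg * s)) ->
  forall s, 0 <= s <= L -> g (t0 + s) = (x0 + sg * s, sg * P (x0 + sg * s)).
Proof.
  intros Hsg Hg [b [Hb Harc]] Hg0 Hpos.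
  assert (Hsq : sg * sg = 1) by (destruct Hsg as [-> | ->]; ring).
  pose proof (proj1 Hg) as Hc.
  set (E := on_branch sg x0 t0 g).
  assert (HE0 : E t0) by (unfold E, on_branch; rewrite Hg0; simpl; split; [ring | reflexivity]).
  pose proof (arc_on_branch _ _ _ _ _ _ Hsq Hc Harc t0 ltac:(lra) HE0) as Harc0.
  destruct (global_traj_grid _ _ g Hg) as [tt [Htt Hloc]].
  assert (Hext : forall i t1, tt i <= t1 <= tt (i + 1)%Z -> t0 < t1 < t0 + L -> E t1 ->
                   forall t, t1 <= t <= tt (i + 1)%Z -> E t).
  { intros i t1 Ht1 Hlt [E1 E2] t Ht.
    destruct (local_traj_arc g _ _ (proj1 Htt i) (Hloc i)) as [sg' [Hsg' Ha]].
    assert (HP : 0 < P (fst (g t1))) by (rewrite E1; apply Hpos; lra).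
    rewrite (arc_direction sg sg' g _ _ t1 Hsg Hsg' Ha Ht1 E2 HP) in Ha.
    exact (arc_on_branch _ _ _ _ _ _ Hsq Hc Ha t1 Ht1 (conj E1 E2) t ltac:(lra)). }
  destruct (time_grid_cell tt Htt b) as [i1 Hi1].
  assert (Hupto : forall i, (i1 <= i)%Z ->
                    forall t, t0 <= t <= t0 + L -> t <= tt (i + 1)%Z -> E t).
  { apply (Z.le_ind (fun i => forall t, t0 <= t <= t0 + L -> t <= tt (i + 1)%Z -> E t)).
    - intros ? ? ->; reflexivity.
    - intros t Ht Hti. destruct (Rle_lt_dec t b); [apply Harc0; lra|].
      apply (Hext i1 b); [lra | lra | apply Harc0; lra | lra].
    - intros i Hi IH t Ht Hti. unfold Z.succ in Hti.
      destruct (Rle_lt_dec t (tt (i + 1)%Z)); [exact (IH t Ht r)|].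
      pose proof (time_grid_le tt Htt (i1 + 1) (i + 1) ltac:(lia)).
      pose proof (proj1 Htt (i + 1)%Z).
      apply (Hext (i + 1)%Z (tt (i + 1)%Z)); [lra | lra | apply IH; lra | lra]. }
  intros s Hs. destruct (time_grid_cell tt Htt (t0 + s)) as [j Hj].
  pose proof (time_grid_le tt Htt (j + 1) (Z.max i1 j + 1) ltac:(lia)).
  destruct (Hupto (Z.max i1 j) ltac:(lia) (t0 + s) ltac:(lra) ltac:(lra)) as [E1 E2].
  apply pair_eq; [lra|]. rewrite E2, E1. f_equal. f_equal. ring.
Qed.

Lemma follow_right g t0 x0 L : pm_traj g -> heads 1 g t0 -> g t0 = (x0, P x0) ->
  (forall s, 0 < s < L -> 0 < P (x0 + s)) ->
  forall s, 0 <= s <= L -> g (t0 + s) = (x0 + s, P (x0 + s)).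
Proof.
  intros Hg Hh Hg0 Hpos s Hs.
  replace (x0 + s) with (x0 + 1 * s) by ring. rewrite <- (Rmult_1_l (P (x0 + 1 * s))).
  apply (traj_follows 1 g t0 x0 L (or_introl eq_refl) Hg Hh); [|intros u Hu|exact Hs];
    rewrite Rmult_1_l; auto.
Qed.

Lemma follow_left g t0 x0 L : pm_traj g -> heads (-1) g t0 -> g t0 = (x0, - P x0) ->
  (forall s, 0 < s < L -> 0 < P (x0 - s)) ->
  forall s, 0 <= s <= L -> g (t0 + s) = (x0 - s, - P (x0 - s)).
Proof.
  intros Hg Hh Hg0 Hpos s Hs.
  replace (x0 - s) with (x0 + -1 * s) by ring.
  replace (- P (x0 + -1 * s)) with (-1 * P (x0 + -1 * s)) by ring.
  apply (traj_follows (-1) g t0 x0 L (or_intror eq_refl) Hg Hh); [|intros u Hu|exact Hs].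
  - rewrite Hg0. f_equal. ring.
  - replace (x0 + -1 * u) with (x0 - u) by ring. auto.
Qed.

Lemma blocked_right g t0 x0 : cont_path g -> heads 1 g t0 -> g t0 = (x0, 0) -> P x0 = 0 ->
  (forall x, x0 < x -> P x < 0) -> False.
Proof.
  intros Hc Hh Hg0 HP0 Hneg.
  apply (heads_blocked 1 g t0 x0 (or_introl eq_refl) Hc Hh Hg0 HP0).
  intros s Hs. apply Hneg. lra.
Qed.

Lemma blocked_left g t0 x0 : cont_path g -> heads (-1) g t0 -> g t0 = (x0, 0) -> P x0 = 0 ->
  (forall x, x < x0 -> P x < 0) -> False.
Proof.
  intros Hc Hh Hg0 HP0 Hneg.
  apply (heads_blocked (-1) g t0 x0 (or_intror eq_refl) Hc Hh Hg0 HP0).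
  intros s Hs. apply Hneg. lra.
Qed.

End PlusMinusFields.

(** * Hausdorff distance and sums over Z *)

Lemma edist_nonneg a b : 0 <= edist a b.
Proof. apply sqrt_pos. Qed.

Lemma edist_sym a b : edist a b = edist b a.
Proof. unfold edist. f_equal. ring. Qed.

Lemma edist_refl a : edist a a = 0.
Proof. unfold edist. rewrite !Rminus_diag. simpl. rewrite !Rmult_0_l, Rplus_0_l. apply sqrt_0. Qed.

Lemma edist_fst a b : Rabs (fst a - fst b) <= edist a b.
Proof.
  unfold edist. rewrite <- sqrt_Rsqr_abs. apply sqrt_le_1_alt.
  unfold Rsqr. pose proof (pow2_ge_0 (snd a - snd b)). lra.
Qed.

Lemma edist_snd a b : Rabs (snd a - snd b) <= edist a b.
Proof.
  unfold edist. rewrite <- sqrt_Rsqr_abs. apply sqrt_le_1_alt.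
  unfold Rsqr. pose proof (pow2_ge_0 (fst a - fst b)). lra.
Qed.

Lemma edist_le_l1 a b : edist a b <= Rabs (fst a - fst b) + Rabs (snd a - snd b).
Proof.
  unfold edist. set (u := fst a - fst b). set (v := snd a - snd b).
  pose proof (Rabs_pos u). pose proof (Rabs_pos v).
  rewrite <- (sqrt_Rsqr (Rabs u + Rabs v)) by lra. apply sqrt_le_1_alt.
  rewrite <- (pow2_abs u), <- (pow2_abs v). unfold Rsqr. nra.
Qed.

Lemma Glb_Rbar_real_between (S : R -> Prop) x m :
  S x -> (forall y, S y -> m <= y) -> m <= real (Glb_Rbar S) <= x.
Proof.
  intros Hx Hm. destruct (Glb_Rbar_correct S) as [H1 H2].
  specialize (H1 x Hx). specialize (H2 m Hm).
  destruct (Glb_Rbar S); simpl in *; try contradiction; lra.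
Qed.

Lemma Lub_Rbar_real_between (S : R -> Prop) x M :
  S x -> (forall y, S y -> y <= M) -> x <= real (Lub_Rbar S) <= M.
Proof.
  intros Hx HM. destruct (Lub_Rbar_correct S) as [H1 H2].
  specialize (H1 x Hx). specialize (H2 M HM).
  destruct (Lub_Rbar S); simpl in *; try contradiction; lra.
Qed.

(* The junk value [real] of an infinite bound is 0, so these bounds need no nonemptiness. *)
Lemma Glb_Rbar_real_nonneg (S : R -> Prop) : (forall y, S y -> 0 <= y) -> 0 <= real (Glb_Rbar S).
Proof.
  intros Hm. destruct (Glb_Rbar_correct S) as [_ H2]. specialize (H2 0 Hm).
  destruct (Glb_Rbar S); simpl in *; try contradiction; lra.
Qed.

Lemma Lub_Rbar_real_le (S : R -> Prop) M : 0 <= M -> (forall y, S y -> y <= M) ->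
  real (Lub_Rbar S) <= M.
Proof.
  intros HM Hm. destruct (Lub_Rbar_correct S) as [_ H2]. specialize (H2 M Hm).
  destruct (Lub_Rbar S); simpl in *; try contradiction; lra.
Qed.

Lemma Lub_Rbar_real_nonneg (S : R -> Prop) : (forall y, S y -> 0 <= y) -> 0 <= real (Lub_Rbar S).
Proof.
  intros Hm. destruct (classic (exists x, S x)) as [[x Hx]|Hempty].
  - destruct (Lub_Rbar_correct S) as [H1 _]. specialize (H1 x Hx). specialize (Hm x Hx).
    destruct (Lub_Rbar S); simpl in *; try contradiction; lra.
  - destruct (Lub_Rbar_correct S) as [_ H2].
    assert (Hbot : Rbar_le (Lub_Rbar S) m_infty) by (apply H2; intros y Hy; exfalso; eauto).
    destruct (Lub_Rbar S); simpl in *; try contradiction; lra.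
Qed.

Lemma pdist_le a (B : pt -> Prop) b : B b -> pdist a B <= edist a b.
Proof.
  intros Hb. apply (Glb_Rbar_real_between _ _ 0); [exists b; auto|].
  intros y [b' [_ ->]]. apply edist_nonneg.
Qed.

Lemma pdist_ge a (B : pt -> Prop) b c : B b -> (forall b, B b -> c <= edist a b) -> c <= pdist a B.
Proof.
  intros Hb Hc. apply (Glb_Rbar_real_between _ (edist a b)); [exists b; auto|].
  intros y [b' [Hb' ->]]. auto.
Qed.

Lemma pdist_nonneg a B : 0 <= pdist a B.
Proof. apply Glb_Rbar_real_nonneg. intros y [b [_ ->]]. apply edist_nonneg. Qed.

Lemma hdist_nonneg A B : 0 <= hdist A B.
Proof.
  eapply Rle_trans; [|apply Rmax_l].
  apply Lub_Rbar_real_nonneg. intros y [a [_ ->]]. apply pdist_nonneg.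
Qed.

Lemma hdist_le (A B : pt -> Prop) M : 0 <= M ->
  (forall a, A a -> exists b, B b /\ edist a b <= M) ->
  (forall b, B b -> exists a, A a /\ edist b a <= M) -> hdist A B <= M.
Proof.
  intros HM HA HB. apply Rmax_lub; apply Lub_Rbar_real_le; auto.
  - intros y [a [Ha ->]]. destruct (HA a Ha) as [b [Hb Hd]].
    eapply Rle_trans; [apply (pdist_le a B b Hb) | exact Hd].
  - intros y [b [Hb ->]]. destruct (HB b Hb) as [a [Ha Hd]].
    eapply Rle_trans; [apply (pdist_le b A a Ha) | exact Hd].
Qed.

Lemma hdist_refl A : hdist A A = 0.
Proof.
  apply Rle_antisym; [|apply hdist_nonneg].
  apply hdist_le; [lra | |]; intros a Ha; exists a; rewrite edist_refl; split; auto; lra.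
Qed.

Lemma hdist_sym A B : hdist A B = hdist B A.
Proof. apply Rmax_comm. Qed.

Lemma hdist_ge (A B : pt -> Prop) a0 b0 c M : A a0 -> B b0 ->
  (forall b, B b -> c <= edist a0 b) -> (forall a b, A a -> B b -> edist a b <= M) ->
  c <= hdist A B.
Proof.
  intros Ha0 Hb0 Hc HM. eapply Rle_trans; [|apply Rmax_l].
  eapply Rle_trans; [apply (pdist_ge a0 B b0 c Hb0 Hc)|].
  apply (Lub_Rbar_real_between _ _ M); [exists a0; auto|].
  intros y [a [Ha ->]]. eapply Rle_trans; [apply (pdist_le a B b0 Hb0) | auto].
Qed.

Lemma hdist_le_diam (A B : pt -> Prop) M : 0 <= M -> (exists a, A a) -> (exists b, B b) ->
  (forall a b, A a -> B b -> edist a b <= M) -> hdist A B <= M.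
Proof.
  intros HM [a0 Ha0] [b0 Hb0] Hd. apply hdist_le; auto.
  - intros a Ha. exists b0. auto.
  - intros b Hb. exists a0. rewrite edist_sym. auto.
Qed.

Definition zfold (a : Z -> R) : nat -> R :=
  fun n => if Nat.eqb n 0 then a 0%Z else a (Z.of_nat n) + a (- Z.of_nat n)%Z.

Lemma zfold_bounds (u v : Z -> R) : (forall i, 0 <= u i <= v i) ->
  forall n, 0 <= zfold u n <= zfold v n.
Proof.
  intros H n. unfold zfold. destruct (Nat.eqb n 0); [apply H|].
  pose proof (H (Z.of_nat n)). pose proof (H (- Z.of_nat n)%Z). lra.
Qed.

Lemma ex_zfold_le (u v : Z -> R) : (forall i, 0 <= u i <= v i) ->
  ex_series (zfold v) -> ex_series (zfold u).
Proof.
  intros H. apply (@ex_series_le R_AbsRing R_CompleteNormedModule).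
  intros n. pose proof (zfold_bounds u v H n). unfold norm; simpl. rewrite Rabs_pos_eq; lra.
Qed.

Lemma zsum_le (u v : Z -> R) : (forall i, 0 <= u i <= v i) -> ex_series (zfold v) ->
  zsum u <= zsum v.
Proof. intros H Hv. apply Series_le; auto. apply (zfold_bounds u v H). Qed.

Lemma zfold_scal c u n : zfold (fun i => c * u i) n = c * zfold u n.
Proof. unfold zfold. destruct (Nat.eqb n 0); ring. Qed.

Lemma zsum_scal c u : zsum (fun i => c * u i) = c * zsum u.
Proof. unfold zsum. rewrite <- Series_scal_l. apply Series_ext, zfold_scal. Qed.

Lemma ex_zfold_scal c u : ex_series (zfold u) -> ex_series (zfold (fun i => c * u i)).
Proof.
  intros H. apply (ex_series_ext (fun n => scal c (zfold u n))).
  - intros n. rewrite zfold_scal. reflexivity.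
  - apply (@ex_series_scal_l R_AbsRing R_NormedModule), H.
Qed.

Lemma zsum_sandwich (u v : Z -> R) c1 c2 : 0 <= c1 -> (forall i, 0 <= u i) ->
  (forall i, c1 * u i <= v i <= c2 * u i) -> ex_series (zfold u) ->
  c1 * zsum u <= zsum v <= c2 * zsum u.
Proof.
  intros Hc1 Hu Huv Hex. rewrite <- !zsum_scal.
  assert (Hv : forall i, 0 <= v i) by (intros i; pose proof (Hu i); pose proof (Huv i); nra).
  split; apply zsum_le.
  - intros i. pose proof (Hu i). pose proof (Huv i). split; [nra | lra].
  - apply (ex_zfold_le _ (fun i => c2 * u i)); [|apply ex_zfold_scal, Hex].
    intros i. pose proof (Hv i). pose proof (Huv i). lra.
  - intros i. pose proof (Hv i). pose proof (Huv i). lra.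
  - apply ex_zfold_scal, Hex.
Qed.

Lemma linear_le_geometric n : INR n + 2 <= 4 * (3 / 2) ^ n.
Proof.
  induction n as [|n IH]; [simpl; lra|]. rewrite S_INR. simpl. pose proof (pos_INR n). lra.
Qed.

(* (n + 2) 2^-n <= 4 (3/4)^n: linear growth is summable against the weights 2^-|j|. *)
Lemma ex_zfold_linear_weighted (d : Z -> R) C E : 0 <= C -> 0 <= E ->
  (forall j, 0 <= d j <= C + E * INR (Z.abs_nat j)) ->
  ex_series (zfold (fun j => d j * (/ 2) ^ (Z.abs_nat j))).
Proof.
  intros HC HE Hd.
  apply (@ex_series_le R_AbsRing R_CompleteNormedModule _ (fun n => 8 * (C + E) * (3 / 4) ^ n)).
  - intros n. unfold norm; simpl. unfold abs; simpl. unfold zfold.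
    assert (Hq : 0 <= (/ 2) ^ n) by (apply pow_le; lra).
    pose proof (linear_le_geometric n) as Hlin.
    assert (Eq : (3 / 4) ^ n = (3 / 2) ^ n * (/ 2) ^ n)
      by (rewrite <- Rpow_mult_distr; f_equal; lra).
    pose proof (pos_INR n).
    destruct (Nat.eqb_spec n 0) as [->|Hn].
    + pose proof (Hd 0%Z) as H0. simpl in *. rewrite Rabs_pos_eq; nra.
    + pose proof (Hd (Z.of_nat n)) as A1. pose proof (Hd (- Z.of_nat n)%Z) as A2.
      replace (Z.abs_nat (Z.of_nat n)) with n in * by lia.
      replace (Z.abs_nat (- Z.of_nat n)) with n in * by lia.
      rewrite Rabs_pos_eq by nra. rewrite Eq.
      assert (Hsum : d (Z.of_nat n) + d (- Z.of_nat n)%Z <= 8 * (C + E) * (3 / 2) ^ n).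
      { assert ((C + E) * (INR n + 2) <= (C + E) * (4 * (3 / 2) ^ n))
          by (apply Rmult_le_compat_l; lra).
        nra. }
      replace (8 * (C + E) * ((3 / 2) ^ n * (/ 2) ^ n))
        with (8 * (C + E) * (3 / 2) ^ n * (/ 2) ^ n) by ring.
      rewrite <- Rmult_plus_distr_r. apply Rmult_le_compat_r; auto.
  - apply (ex_series_ext (fun n => scal (8 * (C + E)) ((3 / 4) ^ n))); [reflexivity|].
    apply (@ex_series_scal_l R_AbsRing R_NormedModule), ex_series_geom.
    rewrite Rabs_pos_eq; lra.
Qed.

(** * Itineraries of trajectories made of unit-time cells *)

Section Itineraries.
Variables (X Y : vf) (Lam : pt -> Prop) (I : Z -> pt -> Prop) (Ps : R -> Prop).
(* [cell n th], th in [0,1], is the unit-time run along the closure of the arc I_n from one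
   tangency point (p_l, 0) to the next. *)
Variables (valid : Z -> Prop) (cell : Z -> R -> pt).

Definition tangency (z : pt) : Prop := exists x, Ps x /\ z = (x, 0).

Hypothesis tangency_cell : forall g, Omega X Y Lam g -> forall t0, tangency (g t0) ->
  exists n, valid n /\ forall th, 0 <= th <= 1 -> g (t0 + th) = cell n th.
Hypothesis tangency_within_unit : forall g, Omega X Y Lam g -> forall T0,
  exists t, T0 <= t <= T0 + 1 /\ tangency (g t).
Hypothesis cell_interior : forall n th, valid n -> 0 < th < 1 -> I n (cell n th).
Hypothesis cell_ends : forall n, valid n -> tangency (cell n 0) /\ tangency (cell n 1).
Hypothesis arc_not_tangency : forall n z, I n z -> ~ tangency z.
Hypothesis arcs_disjoint : forall n m z, I n z -> I m z -> n = m.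
Hypothesis tangency_Lam : forall z, tangency z -> Lam z.

Lemma tangency_next g : Omega X Y Lam g -> forall t0, tangency (g t0) ->
  tangency (g (t0 + 1)) /\ forall th, 0 < th < 1 -> ~ tangency (g (t0 + th)).
Proof.
  intros Hg t0 Ht0. destruct (tangency_cell g Hg t0 Ht0) as [n [Hn Hcell]]. split.
  - rewrite Hcell by lra. apply cell_ends, Hn.
  - intros th Hth. rewrite Hcell by lra. apply (arc_not_tangency n), cell_interior; assumption.
Qed.

Lemma tangency_prev g : Omega X Y Lam g -> forall t0, tangency (g t0) -> tangency (g (t0 - 1)).
Proof.
  intros Hg t0 Ht0.
  destruct (tangency_within_unit g Hg (t0 - 3 / 2)) as [t [Ht HT]].
  destruct (tangency_next g Hg t HT) as [HT1 Hgap].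
  destruct (Rtotal_order (t0 - t) 1) as [Hlt|[Heq|Hgt]].
  - exfalso. apply (Hgap (t0 - t)); [lra|]. rewrite (fun_eq g _ t0) by ring. exact Ht0.
  - rewrite (fun_eq g _ t) by lra. exact HT.
  - exfalso. destruct (tangency_next g Hg (t + 1) HT1) as [_ Hgap1].
    apply (Hgap1 (t0 - (t + 1))); [lra|]. rewrite (fun_eq g _ t0) by ring. exact Ht0.
Qed.

Lemma tangency_shift g : Omega X Y Lam g -> forall tau, tangency (g tau) ->
  forall j, tangency (g (tau + IZR j)).
Proof.
  intros Hg tau Htau. apply Z.peano_ind.
  - rewrite Rplus_0_r. exact Htau.
  - intros j IH. rewrite succ_IZR, (fun_eq g _ (tau + IZR j + 1)) by ring.
    apply (tangency_next g Hg _ IH).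
  - intros j IH. rewrite <- Z.sub_1_r, minus_IZR, (fun_eq g _ (tau + IZR j - 1)) by ring.
    apply (tangency_prev g Hg _ IH).
Qed.

Definition chained (g : R -> pt) (tau : R) (a : Z -> Z) : Prop :=
  -1 < tau <= 0 /\
  forall j, valid (a j) /\ forall th, 0 <= th <= 1 -> g (tau + IZR j + th) = cell (a j) th.

Lemma chained_exists g : Omega X Y Lam g -> exists tau a, chained g tau a.
Proof.
  intros Hg. destruct (tangency_within_unit g Hg (-1)) as [t [Ht HT]].
  assert (Htau : exists tau, -1 < tau <= 0 /\ tangency (g tau)).
  { destruct (Req_dec t (-1)) as [->|Hne].
    - exists 0. split; [lra|]. rewrite (fun_eq g 0 (-1 + 1)) by ring.
      apply (tangency_next g Hg _ HT).
    - exists t. split; [lra | exact HT]. }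
  destruct Htau as [tau [Hrange Htau]].
  destruct (choice (fun j n => valid n /\
              forall th, 0 <= th <= 1 -> g (tau + IZR j + th) = cell n th)) as [a Ha].
  { intros j. apply tangency_cell, tangency_shift; assumption. }
  exists tau, a. split; assumption.
Qed.

Lemma chained_is_itin g tau a : chained g tau a -> is_itin I Ps g a.
Proof.
  intros [Htau Hch] j. destruct (Hch j) as [Hv Hcell].
  destruct (Req_dec tau 0) as [->|Hne].
  - right. destruct (proj1 (cell_ends _ Hv)) as [x [Hx Ex]]. exists x. split; [exact Hx|]. split.
    + rewrite <- Ex, <- Hcell by lra. apply fun_eq. ring.
    + rewrite (fun_eq g _ (0 + IZR j + / 2)) by ring. rewrite Hcell by lra.
      apply cell_interior; [exact Hv | lra].
  - left. assert (Hneg : tau < 0) by (destruct Htau as [_ [Hlt|Heq]]; [exact Hlt | contradiction]).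
    rewrite (fun_eq g _ (tau + IZR j + - tau)) by ring. rewrite Hcell by lra.
    apply cell_interior; [exact Hv | lra].
Qed.

Lemma is_itin_unique g s1 s2 : is_itin I Ps g s1 -> is_itin I Ps g s2 -> forall j, s1 j = s2 j.
Proof.
  intros H1 H2 j.
  destruct (H1 j) as [A|[x [Hx [E A]]]], (H2 j) as [B|[y [Hy [F B]]]].
  - exact (arcs_disjoint _ _ _ A B).
  - exfalso. apply (arc_not_tangency _ _ A). exists y. auto.
  - exfalso. apply (arc_not_tangency _ _ B). exists x. auto.
  - exact (arcs_disjoint _ _ _ A B).
Qed.

Lemma itin_chained g tau a : chained g tau a -> forall j, itin I Ps g j = a j.
Proof.
  intros Hch. pose proof (chained_is_itin g tau a Hch) as Ha.
  apply (is_itin_unique g); [|exact Ha]. unfold itin. apply epsilon_spec. exists a. exact Ha.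
Qed.

Lemma itin_is_itin g : Omega X Y Lam g -> is_itin I Ps g (itin I Ps g).
Proof.
  intros Hg. destruct (chained_exists g Hg) as [tau [a Hch]].
  unfold itin. apply epsilon_spec. exists a. exact (chained_is_itin g tau a Hch).
Qed.

Lemma itin_valid g : Omega X Y Lam g -> forall j, valid (itin I Ps g j).
Proof.
  intros Hg j. destruct (chained_exists g Hg) as [tau [a Hch]].
  rewrite (itin_chained g tau a Hch). apply Hch.
Qed.

Lemma itin_cells_connect g : Omega X Y Lam g ->
  forall j, cell (itin I Ps g j) 1 = cell (itin I Ps g (j + 1)) 0.
Proof.
  intros Hg j. destruct (chained_exists g Hg) as [tau [a Hch]].
  rewrite !(itin_chained g tau a Hch).
  destruct (proj2 Hch j) as [_ H1], (proj2 Hch (j + 1)%Z) as [_ H2].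
  rewrite <- H1, <- H2 by lra. apply fun_eq. rewrite plus_IZR. ring.
Qed.

Lemma chained_at_tangency g tau a : chained g tau a -> tangency (g 0) -> tau = 0.
Proof.
  intros [Htau Hch] HT. destruct (Req_dec tau 0) as [|Hne]; [assumption|]. exfalso.
  assert (Hneg : tau < 0) by (destruct Htau as [_ [Hlt|Heq]]; [exact Hlt | contradiction]).
  destruct (Hch 0%Z) as [Hv Hcell].
  rewrite (fun_eq g 0 (tau + IZR 0 + - tau)), Hcell in HT by (simpl; lra).
  apply (arc_not_tangency (a 0%Z) _ (cell_interior _ (- tau) Hv ltac:(lra)) HT).
Qed.

Lemma rep_spec g : Omega X Y Lam g ->
  Omega X Y Lam (rep X Y Lam I Ps g) /\
  (forall j, itin I Ps (rep X Y Lam I Ps g) j = itin I Ps g j) /\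
  exists x, Ps x /\ rep X Y Lam I Ps g 0 = (x, 0).
Proof.
  intros Hg. unfold rep. apply epsilon_spec.
  destruct (chained_exists g Hg) as [tau [a Hch]].
  assert (Hch' : chained (fun t => g (t + tau)) 0 a).
  { destruct Hch as [Htau Hcells]. split; [lra|]. intros j.
    destruct (Hcells j) as [Hv Hcell]. split; [exact Hv|].
    intros th Hth. rewrite <- Hcell by exact Hth. apply fun_eq. ring. }
  assert (HT : tangency (g tau)).
  { destruct (proj2 Hch 0%Z) as [Hv Hcell].
    rewrite (fun_eq g tau (tau + IZR 0 + 0)) by (simpl; ring).
    rewrite Hcell by lra. apply cell_ends, Hv. }
  exists (fun t => g (t + tau)). split; [|split].
  - split; [apply global_traj_shift, Hg|]. rewrite Rplus_0_l. apply tangency_Lam, HT.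
  - intros j. rewrite (itin_chained _ _ _ Hch'), (itin_chained _ _ _ Hch). reflexivity.
  - destruct HT as [x [Hx E]]. exists x. split; [exact Hx|]. rewrite Rplus_0_l. exact E.
Qed.

Definition cell_set (n : Z) (z : pt) : Prop := exists th, 0 <= th <= 1 /\ z = cell n th.

Lemma seg_rep g : Omega X Y Lam g ->
  forall i, seg (rep X Y Lam I Ps g) i = cell_set (itin I Ps g i).
Proof.
  intros Hg i. destruct (rep_spec g Hg) as [Hh [Hit [x [Hx H0]]]].
  set (h := rep X Y Lam I Ps g) in *.
  destruct (chained_exists h Hh) as [tau [a Hch]].
  assert (tau = 0) as ->.
  { apply (chained_at_tangency h tau a Hch). exists x. split; assumption. }
  rewrite <- Hit, (itin_chained h 0 a Hch).
  destruct (proj2 Hch i) as [_ Hcell].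
  apply functional_extensionality; intro z; apply propositional_extensionality; split.
  - intros [t [Ht ->]]. exists (t - IZR i). split; [lra|].
    rewrite <- Hcell by lra. apply fun_eq. ring.
  - intros [th [Hth ->]]. exists (IZR i + th). split; [lra|].
    rewrite <- Hcell by lra. apply fun_eq. ring.
Qed.

Lemma rho_cells g1 g2 : Omega X Y Lam g1 -> Omega X Y Lam g2 ->
  rho X Y Lam I Ps g1 g2 = zsum (fun i =>
    (/ 2) ^ (Z.abs_nat i) * hdist (cell_set (itin I Ps g1 i)) (cell_set (itin I Ps g2 i))).
Proof.
  intros H1 H2. unfold rho. f_equal. apply functional_extensionality. intros i.
  rewrite (seg_rep g1 H1), (seg_rep g2 H2). reflexivity.
Qed.

Lemma rho_dseq_bounds c1 c2 g1 g2 : 0 < c1 ->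
  (forall n m, valid n -> valid m ->
     c1 * IZR (Z.abs (n - m)) <= hdist (cell_set n) (cell_set m) <= c2 * IZR (Z.abs (n - m))) ->
  Omega X Y Lam g1 -> Omega X Y Lam g2 ->
  ex_series (zfold (fun j =>
    IZR (Z.abs (itin I Ps g1 j - itin I Ps g2 j)) * (/ 2) ^ (Z.abs_nat j))) ->
  c1 * dseq (itin I Ps g1) (itin I Ps g2) <= rho X Y Lam I Ps g1 g2 <=
  c2 * dseq (itin I Ps g1) (itin I Ps g2).
Proof.
  intros Hc1 Hcells H1 H2 Hex. rewrite rho_cells by assumption. unfold dseq.
  apply zsum_sandwich; [lra | | | exact Hex].
  - intros i. apply Rmult_le_pos; [apply IZR_le; lia | apply pow_le; lra].
  - intros i. pose proof (Hcells _ _ (itin_valid g1 H1 i) (itin_valid g2 H2 i)).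
    assert (0 <= (/ 2) ^ Z.abs_nat i) by (apply pow_le; lra).
    split; nra.
Qed.

Lemma itinerary_homeo_of_bounds (target : (Z -> Z) -> Prop) c1 c2 : 0 < c1 -> 0 < c2 ->
  (forall n m, valid n -> valid m ->
     c1 * IZR (Z.abs (n - m)) <= hdist (cell_set n) (cell_set m) <= c2 * IZR (Z.abs (n - m))) ->
  (forall g1 g2, Omega X Y Lam g1 -> Omega X Y Lam g2 ->
     ex_series (zfold (fun j =>
       IZR (Z.abs (itin I Ps g1 j - itin I Ps g2 j)) * (/ 2) ^ (Z.abs_nat j)))) ->
  (forall g, Omega X Y Lam g -> target (itin I Ps g)) ->
  itinerary_homeo X Y Lam I Ps target.
Proof.
  intros Hc1 Hc2 Hcells Hex Htarget. split; [|split].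
  - intros g Hg. split; [apply itin_is_itin | apply Htarget]; exact Hg.
  - intros g1 H1 eps Heps. exists (c1 * eps). split; [nra|].
    intros g2 H2 Hr.
    destruct (rho_dseq_bounds c1 c2 g1 g2 Hc1 Hcells H1 H2 (Hex g1 g2 H1 H2)) as [Hlow _].
    apply (Rmult_lt_reg_l c1); lra.
  - intros g1 H1 eps Heps. exists (eps / c2). split; [apply Rdiv_lt_0_compat; assumption|].
    intros g2 H2 Hr.
    destruct (rho_dseq_bounds c1 c2 g1 g2 Hc1 Hcells H1 H2 (Hex g1 g2 H1 H2)) as [_ Hup].
    apply (Rmult_lt_compat_l c2) in Hr; [|assumption].
    replace (c2 * (eps / c2)) with eps in Hr by (field; lra). lra.
Qed.

End Itineraries.

(** * The case k = oo *)

Lemma cos_add_int_period y j : cos (y + 2 * PI * IZR j) = cos y.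
Proof.
  destruct (Z_le_gt_dec 0 j).
  - replace j with (Z.of_nat (Z.to_nat j)) by lia. rewrite <- INR_IZR_INZ.
    rewrite <- (cos_period y (Z.to_nat j)). f_equal. ring.
  - replace j with (- Z.of_nat (Z.to_nat (- j)))%Z by lia. rewrite opp_IZR, <- INR_IZR_INZ.
    rewrite <- (cos_period (y + 2 * PI * - INR (Z.to_nat (- j))) (Z.to_nat (- j))). f_equal. ring.
Qed.

Definition Dinf (x : R) : R := 2 * sin (2 * PI * x).

Lemma Pinf_derive x : is_derive Pinf x (Dinf x).
Proof. unfold Pinf, Dinf. auto_derive; auto. pose proof PI_RGT_0. field. lra. Qed.

Lemma Pinf_add_int j x : Pinf (IZR j + x) = Pinf x.
Proof.
  unfold Pinf. rewrite <- (cos_add_int_period (2 * PI * x) j). do 3 f_equal. ring.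
Qed.

Lemma Pinf_int j : Pinf (IZR j) = 0.
Proof.
  rewrite <- (Rplus_0_r (IZR j)), Pinf_add_int. unfold Pinf.
  rewrite Rmult_0_r, cos_0. unfold Rdiv. ring.
Qed.

Lemma Pinf_half_int j : Pinf (IZR j + / 2) = 2 / PI.
Proof.
  rewrite Pinf_add_int. unfold Pinf. replace (2 * PI * / 2) with PI by field.
  rewrite cos_PI. f_equal. ring.
Qed.

Lemma Pinf_bounds x : 0 <= Pinf x <= 2 / PI.
Proof.
  unfold Pinf. pose proof (COS_bound (2 * PI * x)). pose proof PI_RGT_0.
  split; [apply Rdiv_le_0_compat; lra|].
  unfold Rdiv. apply Rmult_le_compat_r; [left; apply Rinv_0_lt_compat|]; lra.
Qed.

Lemma Pinf_pos j x : IZR j < x < IZR j + 1 -> 0 < Pinf x.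
Proof.
  intros Hx. replace x with (IZR j + (x - IZR j)) by ring. rewrite Pinf_add_int.
  set (th := x - IZR j). assert (Hth : 0 < th < 1) by (unfold th; lra).
  unfold Pinf. pose proof PI_RGT_0. apply Rdiv_lt_0_compat; [|assumption].
  destruct (Rle_lt_dec th (/ 2)).
  - assert (cos (2 * PI * th) < cos 0) by (apply cos_decreasing_1; nra). rewrite cos_0 in *. lra.
  - assert (cos (2 * PI * th) < cos (2 * PI)) by (apply cos_increasing_1; nra).
    rewrite cos_2PI in *. lra.
Qed.

Notation tangency_inf := (tangency Psetinf).

Definition cell_inf (n : Z) (th : R) : pt :=
  let q := (n / 2)%Z in
  if Z.eqb (n mod 2) 0 then (IZR q + th, Pinf (IZR q + th))
  else (IZR q + 1 - th, - Pinf (IZR q + 1 - th)).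

Lemma cell_inf_even q th : cell_inf (2 * q) th = (IZR q + th, Pinf (IZR q + th)).
Proof.
  unfold cell_inf. rewrite <- (Z.add_0_r (2 * q)).
  destruct (Z_div_mod_2 q 0 ltac:(lia)) as [-> ->]. reflexivity.
Qed.

Lemma cell_inf_odd q th : cell_inf (2 * q + 1) th = (IZR q + 1 - th, - Pinf (IZR q + 1 - th)).
Proof. unfold cell_inf. destruct (Z_div_mod_2 q 1 ltac:(lia)) as [-> ->]. reflexivity. Qed.

Lemma tangency_inf_int l : tangency_inf (IZR l, 0).
Proof. exists (IZR l). split; [exists l|]; reflexivity. Qed.

Lemma inf_cell_interior n th : 0 < th < 1 -> Iinf n (cell_inf n th).
Proof.
  intros Hth. destruct (Z.Even_or_Odd n) as [[q ->]|[q ->]]; exists q;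
    [left; rewrite cell_inf_even | right; rewrite cell_inf_odd]; simpl; repeat split; lra.
Qed.

Lemma inf_cell_ends n : tangency_inf (cell_inf n 0) /\ tangency_inf (cell_inf n 1).
Proof.
  destruct (Z.Even_or_Odd n) as [[q ->]|[q ->]];
    rewrite ?cell_inf_even, ?cell_inf_odd; split.
  - rewrite Rplus_0_r, Pinf_int. apply tangency_inf_int.
  - rewrite <- plus_IZR, Pinf_int. apply tangency_inf_int.
  - rewrite Rminus_0_r, <- plus_IZR, Pinf_int, Ropp_0. apply tangency_inf_int.
  - replace (IZR q + 1 - 1) with (IZR q) by ring. rewrite Pinf_int, Ropp_0. apply tangency_inf_int.
Qed.

Lemma inf_arc_not_tangency n z : Iinf n z -> ~ tangency_inf z.
Proof.
  intros [j Hj] [x [[l ->] ->]]. simpl in Hj.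
  destruct Hj as [[_ [[H1 H2] _]]|[_ [[H1 H2] _]]];
    apply lt_IZR in H1; apply IZR_lt_succ in H2; lia.
Qed.

Lemma inf_arcs_disjoint n m z : Iinf n z -> Iinf m z -> n = m.
Proof.
  intros [j Hj] [j' Hj'].
  assert (j = j') as <-.
  { destruct Hj as [[_ [H _]]|[_ [H _]]], Hj' as [[_ [H' _]]|[_ [H' _]]];
      apply Z.le_antisymm; apply IZR_lt_succ; lra. }
  destruct Hj as [[E1 [H1 Y1]]|[E1 [H1 Y1]]], Hj' as [[E2 [H2 Y2]]|[E2 [H2 Y2]]]; try lia;
    pose proof (Pinf_pos j (fst z) H1); lra.
Qed.

Lemma inf_tangency_Lam z : tangency_inf z -> Laminf z.
Proof. intros [x [[l ->] ->]]. left. simpl. rewrite Pinf_int. reflexivity. Qed.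

(* Every index is admissible for k = oo, hence the trivial validity condition [True]. *)
Lemma inf_tangency_cell g : Omega Xinf Yinf Laminf g -> forall t0, tangency_inf (g t0) ->
  exists n, True /\ forall th, 0 <= th <= 1 -> g (t0 + th) = cell_inf n th.
Proof.
  intros [Hg _] t0 [x [[l ->] Hg0]].
  destruct (traj_heads Dinf g Hg t0) as [Hh|Hh].
  - exists (2 * l)%Z. split; [exact I|]. intros th Hth. rewrite cell_inf_even.
    apply (follow_right Pinf Dinf Pinf_derive g t0 (IZR l) 1 Hg Hh); [|intros s Hs|exact Hth].
    + rewrite Hg0, Pinf_int. reflexivity.
    + apply (Pinf_pos l). lra.
  - exists (2 * (l - 1) + 1)%Z. split; [exact I|]. intros th Hth.
    rewrite cell_inf_odd, minus_IZR.
    replace (IZR l - 1 + 1 - th) with (IZR l - th) by ring.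
    apply (follow_left Pinf Dinf Pinf_derive g t0 (IZR l) 1 Hg Hh); [|intros s Hs|exact Hth].
    + rewrite Hg0, Pinf_int, Ropp_0. reflexivity.
    + apply (Pinf_pos (l - 1)). rewrite minus_IZR. lra.
Qed.

Lemma inf_tangency_within_unit g : Omega Xinf Yinf Laminf g -> forall T0,
  exists t, T0 <= t <= T0 + 1 /\ tangency_inf (g t).
Proof.
  intros [Hg HL] T0.
  assert (Hon : on_graph Pinf (g T0)).
  { apply (traj_on_graph Pinf Dinf Pinf_derive g Hg). split; [apply Pinf_bounds | exact HL]. }
  destruct Hon as [_ Hv].
  set (u := fst (g T0)) in *. set (v := snd (g T0)) in *.
  assert (Eg : g T0 = (u, v)) by apply surjective_pairing.
  set (j := Int_part u). destruct (base_Int_part u) as [Hj1 Hj2]. fold j in Hj1, Hj2.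
  destruct (Req_dec u (IZR j)) as [Eu|Nu].
  { exists T0. split; [lra|]. rewrite Eg, Eu.
    rewrite Eu, Pinf_int in Hv. replace v with 0 by lra. apply tangency_inf_int. }
  assert (Hju : IZR j < u) by (destruct Hj1 as [|E]; [assumption | symmetry in E; contradiction]).
  assert (Hpos : forall x, IZR j < x < IZR j + 1 -> 0 < Pinf x) by apply Pinf_pos.
  pose proof (Hpos u ltac:(lra)) as Hpu.
  destruct (traj_heads Dinf g Hg T0) as [Hh|Hh]; pose proof (heads_sign _ _ _ _ Hh) as Hs;
    fold v in Hs.
  - assert (Gu : g T0 = (u, Pinf u)) by (rewrite Eg; f_equal; lra).
    exists (T0 + (IZR j + 1 - u)). split; [lra|].
    rewrite (follow_right Pinf Dinf Pinf_derive g T0 u (IZR j + 1 - u) Hg Hh Gu);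
      [| intros s Hs'; apply Hpos; lra | lra].
    replace (u + (IZR j + 1 - u)) with (IZR (j + 1)) by (rewrite plus_IZR; ring).
    rewrite Pinf_int. apply tangency_inf_int.
  - assert (Gu : g T0 = (u, - Pinf u)) by (rewrite Eg; f_equal; lra).
    exists (T0 + (u - IZR j)). split; [lra|].
    rewrite (follow_left Pinf Dinf Pinf_derive g T0 u (u - IZR j) Hg Hh Gu);
      [| intros s Hs'; apply Hpos; lra | lra].
    replace (u - (u - IZR j)) with (IZR j) by ring.
    rewrite Pinf_int, Ropp_0. apply tangency_inf_int.
Qed.

Lemma cell_inf_column q n : n = (2 * q)%Z \/ n = (2 * q + 1)%Z ->
  cell_set cell_inf n (IZR q, 0) /\ cell_set cell_inf n (IZR q + 1, 0) /\
  forall z, cell_set cell_inf n z -> IZR q <= fst z <= IZR q + 1 /\ Rabs (snd z) <= 2 / PI.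
Proof.
  assert (Hab : forall x, Rabs (Pinf x) <= 2 / PI)
    by (intros x; pose proof (Pinf_bounds x); rewrite Rabs_pos_eq; lra).
  intros [-> | ->]; (split; [|split]).
  - exists 0. split; [lra|]. rewrite cell_inf_even, Rplus_0_r, Pinf_int. reflexivity.
  - exists 1. split; [lra|]. rewrite cell_inf_even, <- plus_IZR, Pinf_int. reflexivity.
  - intros z [th [Hth ->]]. rewrite cell_inf_even. simpl. split; [lra | apply Hab].
  - exists 1. split; [lra|]. rewrite cell_inf_odd.
    replace (IZR q + 1 - 1) with (IZR q) by ring. rewrite Pinf_int, Ropp_0. reflexivity.
  - exists 0. split; [lra|]. rewrite cell_inf_odd, Rminus_0_r, <- plus_IZR, Pinf_int, Ropp_0.
    reflexivity.
  - intros z [th [Hth ->]]. rewrite cell_inf_odd. simpl. rewrite Rabs_Ropp.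
    split; [lra | apply Hab].
Qed.

Lemma inf_cell_diam n m q q' : n = (2 * q)%Z \/ n = (2 * q + 1)%Z ->
  m = (2 * q')%Z \/ m = (2 * q' + 1)%Z ->
  forall a b, cell_set cell_inf n a -> cell_set cell_inf m b ->
  edist a b <= IZR (Z.abs (q - q')) + 1 + 4 / PI.
Proof.
  intros Hn Hm a b Ha Hb.
  destruct (proj2 (proj2 (cell_inf_column q n Hn)) a Ha) as [Ha1 Ha2].
  destruct (proj2 (proj2 (cell_inf_column q' m Hm)) b Hb) as [Hb1 Hb2].
  assert (Hq : Rabs (IZR q - IZR q') <= IZR (Z.abs (q - q')))
    by (rewrite <- minus_IZR, abs_IZR; lra).
  eapply Rle_trans; [apply edist_le_l1|].
  assert (Rabs (fst a - fst b) <= IZR (Z.abs (q - q')) + 1).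
  { apply Rabs_le. apply Rabs_le_between in Hq. lra. }
  assert (Rabs (snd a - snd b) <= 4 / PI).
  { eapply Rle_trans; [apply Rabs_triang|]. rewrite Rabs_Ropp. lra. }
  lra.
Qed.

Lemma inf_hdist_columns n m q q' : n = (2 * q)%Z \/ n = (2 * q + 1)%Z ->
  m = (2 * q')%Z \/ m = (2 * q' + 1)%Z -> (q < q')%Z ->
  IZR (q' - q) <= hdist (cell_set cell_inf n) (cell_set cell_inf m).
Proof.
  intros Hn Hm Hlt.
  destruct (cell_inf_column q n Hn) as [Hl _], (cell_inf_column q' m Hm) as [Hl' [_ Hin']].
  refine (hdist_ge _ _ _ _ _ _ Hl Hl' _ (inf_cell_diam n m q q' Hn Hm)).
  intros b Hb. destruct (Hin' b Hb) as [[Hb1 _] _].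
  eapply Rle_trans; [|apply edist_fst]. simpl. apply IZR_lt in Hlt.
  rewrite minus_IZR, Rabs_left1; lra.
Qed.

Lemma inf_fin_hdist_same_column q :
  2 / PI <= hdist (cell_set cell_inf (2 * q)) (cell_set cell_inf (2 * q + 1)).
Proof.
  assert (Hmid : cell_set cell_inf (2 * q) (IZR q + / 2, 2 / PI)).
  { exists (/ 2). split; [lra|]. rewrite cell_inf_even, Pinf_half_int. reflexivity. }
  destruct (cell_inf_column q (2 * q + 1) (or_intror eq_refl)) as [Hl _].
  refine (hdist_ge _ _ _ _ _ _ Hmid Hl _
            (inf_cell_diam _ _ q q (or_introl eq_refl) (or_intror eq_refl))).
  intros b [th [Hth ->]]. rewrite cell_inf_odd.
  eapply Rle_trans; [|apply edist_snd]. simpl.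
  pose proof (Pinf_bounds (IZR q + 1 - th)). rewrite Rabs_pos_eq; lra.
Qed.

Lemma inf_cell_hdist n m :
  (1 / 3) * IZR (Z.abs (n - m)) <= hdist (cell_set cell_inf n) (cell_set cell_inf m) <=
  (2 + 4 / PI) * IZR (Z.abs (n - m)).
Proof.
  pose proof PI_RGT_0. pose proof PI_4. pose proof PI2_1.
  assert (H4pi : 0 < 4 / PI) by (apply Rdiv_lt_0_compat; lra).
  assert (H2pi : 1 / 2 <= 2 / PI).
  { apply (Rmult_le_reg_r PI); [lra|]. replace (2 / PI * PI) with 2 by (field; lra). lra. }
  destruct (Z.eq_dec n m) as [<-|Hne].
  { rewrite hdist_refl, Z.sub_diag. simpl. lra. }
  assert (HK : 1 <= IZR (Z.abs (n - m))) by (apply IZR_le; lia).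
  assert (Hcol : forall n, exists q, n = (2 * q)%Z \/ n = (2 * q + 1)%Z)
    by (intros k; destruct (Z.Even_or_Odd k) as [[q Hq]|[q Hq]]; exists q; auto).
  destruct (Hcol n) as [q Hn], (Hcol m) as [q' Hm].
  split.
  - destruct (Z.lt_total q q') as [Hlt|[<-|Hgt]].
    + pose proof (inf_hdist_columns n m q q' Hn Hm Hlt).
      assert (IZR (Z.abs (n - m)) <= 3 * IZR (q' - q)) by (rewrite <- mult_IZR; apply IZR_le; lia).
      lra.
    + replace (Z.abs (n - m)) with 1%Z by lia.
      destruct Hn as [-> | ->], Hm as [-> | ->]; try lia;
        [|rewrite hdist_sym]; pose proof (inf_fin_hdist_same_column q); lra.
    + pose proof (inf_hdist_columns m n q' q Hm Hn Hgt). rewrite hdist_sym.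
      assert (IZR (Z.abs (n - m)) <= 3 * IZR (q - q')) by (rewrite <- mult_IZR; apply IZR_le; lia).
      lra.
  - eapply Rle_trans.
    + apply hdist_le_diam; [| exists (IZR q, 0); apply (cell_inf_column q n Hn)
                            | exists (IZR q', 0); apply (cell_inf_column q' m Hm)
                            | exact (inf_cell_diam n m q q' Hn Hm)].
      pose proof (IZR_le _ _ (Z.abs_nonneg (q - q'))). lra.
    + assert (IZR (Z.abs (q - q')) <= IZR (Z.abs (n - m))) by (apply IZR_le; lia). nra.
Qed.

Lemma inf_cell_connect n m : cell_inf n 1 = cell_inf m 0 -> (Z.abs (m - n) <= 2)%Z.
Proof.
  intros E. apply (f_equal fst) in E.
  destruct (Z.Even_or_Odd n) as [[q ->]|[q ->]], (Z.Even_or_Odd m) as [[q' ->]|[q' ->]];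
    rewrite ?cell_inf_even, ?cell_inf_odd in E; simpl in E;
    rewrite ?Rplus_0_r, ?Rminus_0_r, <- ?plus_IZR, <- ?minus_IZR in E; apply eq_IZR in E; lia.
Qed.

Lemma Thetainf_linear (s : Z -> Z) : Thetainf s -> forall j, (Z.abs (s j - s 0%Z) <= 2 * Z.abs j)%Z.
Proof.
  intros Hs.
  assert (Hnat : forall n : nat, (Z.abs (s (Z.of_nat n) - s 0) <= 2 * Z.of_nat n /\
                                  Z.abs (s (- Z.of_nat n) - s 0) <= 2 * Z.of_nat n)%Z).
  { induction n as [|n [IH1 IH2]]; [simpl; rewrite Z.sub_diag; simpl; lia|].
    rewrite Nat2Z.inj_succ, <- Z.add_1_r.
    pose proof (Hs (Z.of_nat n)). pose proof (Hs (- (Z.of_nat n + 1))%Z).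
    replace (- (Z.of_nat n + 1) + 1)%Z with (- Z.of_nat n)%Z in * by lia.
    split; lia. }
  intros j. destruct (Z_le_gt_dec 0 j).
  - destruct (Hnat (Z.to_nat j)) as [H _]. rewrite Z2Nat.id in H by lia. lia.
  - destruct (Hnat (Z.to_nat (- j))) as [_ H]. rewrite Z2Nat.id, Z.opp_involutive in H by lia. lia.
Qed.

Lemma Thetainf_summable s1 s2 : Thetainf s1 -> Thetainf s2 ->
  ex_series (zfold (fun j => IZR (Z.abs (s1 j - s2 j)) * (/ 2) ^ (Z.abs_nat j))).
Proof.
  intros T1 T2.
  apply (ex_zfold_linear_weighted _ (IZR (Z.abs (s1 0%Z - s2 0%Z))) 4);
    [apply IZR_le; lia | lra |].
  intros j. split; [apply IZR_le; lia|].
  rewrite INR_IZR_INZ, Nat2Z.inj_abs_nat, <- mult_IZR, <- plus_IZR. apply IZR_le.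
  pose proof (Thetainf_linear s1 T1 j). pose proof (Thetainf_linear s2 T2 j). lia.
Qed.

Theorem inf_itinerary_homeo : itinerary_homeo Xinf Yinf Laminf Iinf Psetinf Thetainf.
Proof.
  pose proof PI_RGT_0 as Hpi.
  pose proof (fun n th (_ : True) => inf_cell_interior n th) as Hint.
  pose proof (fun n (_ : True) => inf_cell_ends n) as Hends.
  assert (Htheta : forall g, Omega Xinf Yinf Laminf g -> Thetainf (itin Iinf Psetinf g)).
  { intros g Hg j. apply inf_cell_connect.
    exact (itin_cells_connect _ _ _ _ _ _ _ inf_tangency_cell inf_tangency_within_unit
             Hint Hends inf_arc_not_tangency inf_arcs_disjoint g Hg j). }
  apply (itinerary_homeo_of_bounds _ _ _ _ _ _ _ inf_tangency_cell inf_tangency_within_unit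
           Hint Hends inf_arc_not_tangency inf_arcs_disjoint inf_tangency_Lam Thetainf
           (1 / 3) (2 + 4 / PI)).
  - lra.
  - assert (0 < 4 / PI) by (apply Rdiv_lt_0_compat; lra). lra.
  - intros n m _ _. apply inf_cell_hdist.
  - intros g1 g2 H1 H2. apply Thetainf_summable; apply Htheta; assumption.
  - exact Htheta.
Qed.

(** * Finite k *)

Section ListProduct.
Variable f : nat -> R.

Definition prod_list (l : list nat) : R := fold_right Rmult 1 (map f l).

Lemma prod_list_nonneg l : (forall i, In i l -> 0 <= f i) -> 0 <= prod_list l.
Proof.
  induction l as [|i l IH]; intros H; unfold prod_list in *; simpl; [lra|].
  apply Rmult_le_pos; [apply H; left; reflexivity | apply IH; intros; apply H; right; assumption].
Qed.

Lemma prod_list_pos l : (forall i, In i l -> 0 < f i) -> 0 < prod_list l.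
Proof.
  induction l as [|i l IH]; intros H; unfold prod_list in *; simpl; [lra|].
  apply Rmult_lt_0_compat; [apply H; left; reflexivity|].
  apply IH. intros; apply H; right; assumption.
Qed.

Lemma prod_list_zero l i : In i l -> f i = 0 -> prod_list l = 0.
Proof.
  induction l as [|j l IH]; intros Hi Hf; unfold prod_list in *; simpl in *; [contradiction|].
  destruct Hi as [->|Hi]; [rewrite Hf | rewrite (IH Hi Hf)]; ring.
Qed.

Lemma pow_le_prod_list l c : 0 <= c -> (forall i, In i l -> c <= f i) ->
  c ^ length l <= prod_list l.
Proof.
  intros Hc. induction l as [|i l IH]; intros H; unfold prod_list in *; simpl; [lra|].
  apply Rmult_le_compat; [assumption | apply pow_le; assumption | apply H; left; reflexivity |].
  apply IH. intros; apply H; right; assumption.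
Qed.

Lemma prod_list_le_pow l C : (forall i, In i l -> 0 <= f i <= C) -> prod_list l <= C ^ length l.
Proof.
  induction l as [|i l IH]; intros H; unfold prod_list in *; simpl; [lra|].
  apply Rmult_le_compat; [apply H; left; reflexivity | | apply H; left; reflexivity |].
  - apply (prod_list_nonneg l). intros; apply H; right; assumption.
  - apply IH. intros; apply H; right; assumption.
Qed.

End ListProduct.

Lemma ex_derive_prod_list_sq (h : nat -> R) l x :
  ex_derive (fun y => prod_list (fun i => (y - h i) ^ 2) l) x.
Proof.
  induction l as [|i l IH]; unfold prod_list in *; simpl; [apply ex_derive_const|].
  apply (ex_derive_mult (fun y => (y - h i) ^ 2)
           (fun y => fold_right Rmult 1 (map (fun i => (y - h i) ^ 2) l)));
    [auto_derive; auto | exact IH].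
Qed.

Section FiniteCase.
Variable k : nat.
Hypothesis Hk : (2 <= k)%nat.

Let K := Z.of_nat k.
Let a := r1k k.

Definition Qk (x : R) : R := prod_list (fun i => (x - (INR i - INR k / 2)) ^ 2) (seq 1 (k - 1)).

Lemma Pk_factor x : Pk k x = (a ^ 2 - x ^ 2) * Qk x.
Proof. unfold Pk, Qk, prod_list, a, r1k. ring. Qed.

Lemma Pk_derive x : is_derive (Pk k) x (Derive (Pk k) x).
Proof.
  apply Derive_correct. unfold Pk.
  apply (ex_derive_mult (fun x => - (x + (INR k - 1) / 2) * (x - (INR k - 1) / 2))
           (fun x => prod_list (fun i => (x - (INR i - INR k / 2)) ^ 2) (seq 1 (k - 1))));
    [auto_derive; auto | apply (ex_derive_prod_list_sq (fun i => INR i - INR k / 2))].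
Qed.

Lemma K_ge2 : (2 <= K)%Z.
Proof. unfold K. lia. Qed.

Lemma INR_k_ge2 : 2 <= INR k.
Proof. apply (le_INR 2), Hk. Qed.

Lemma a_ge_half : / 2 <= a.
Proof. unfold a, r1k. pose proof INR_k_ge2. lra. Qed.

Lemma r0k_eq : r0k k = - a.
Proof. unfold r0k, a, r1k. field. Qed.

Lemma pk_succ j : pk k (j + 1) = pk k j + 1.
Proof. unfold pk. rewrite plus_IZR. ring. Qed.

Lemma pk_le i j : (i <= j)%Z -> pk k i <= pk k j.
Proof. unfold pk. intros H. apply IZR_le in H. lra. Qed.

Lemma pk_0 : pk k 0 = - a - / 2.
Proof. unfold pk, a, r1k. simpl. field. Qed.

Lemma pk_1 : pk k 1 = - a + / 2.
Proof. unfold pk, a, r1k. simpl. field. Qed.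

Lemma pk_last : pk k (K - 1) = a - / 2.
Proof. unfold pk, a, r1k, K. rewrite minus_IZR, <- INR_IZR_INZ. simpl. field. Qed.

Lemma pk_column_unique c c' x : pk k c <= x < pk k c + 1 -> pk k c' <= x < pk k c' + 1 -> c = c'.
Proof.
  unfold pk. intros H1 H2. apply Z.le_antisymm; apply IZR_lt_succ; lra.
Qed.

Lemma pk_column_not_tangency c l x : pk k c < x < pk k c + 1 -> x <> pk k l.
Proof.
  intros Hx ->. assert (c = l) as -> by (apply (pk_column_unique c l (pk k l)); lra). lra.
Qed.

Lemma tangency_index i : In i (seq 1 (k - 1)) ->
  (1 <= Z.of_nat i <= K - 1)%Z /\ INR i - INR k / 2 = pk k (Z.of_nat i).
Proof.
  intros H. apply in_seq in H. split; [unfold K; lia|].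
  unfold pk. rewrite <- INR_IZR_INZ. reflexivity.
Qed.

Lemma tangency_range l : (1 <= l <= K - 1)%Z -> - a + / 2 <= pk k l <= a - / 2.
Proof. intros Hl. rewrite <- pk_1, <- pk_last. split; apply pk_le; lia. Qed.

Lemma Qk_nonneg x : 0 <= Qk x.
Proof. apply prod_list_nonneg. intros. apply pow2_ge_0. Qed.

Lemma Qk_pos x : (forall l, (1 <= l <= K - 1)%Z -> x <> pk k l) -> 0 < Qk x.
Proof.
  intros Hx. apply prod_list_pos. intros i Hi. destruct (tangency_index i Hi) as [Hl ->].
  apply pow2_gt_0. specialize (Hx _ Hl). lra.
Qed.

Lemma Qk_tangency l : (1 <= l <= K - 1)%Z -> Qk (pk k l) = 0.
Proof.
  intros Hl. apply (prod_list_zero _ _ (Z.to_nat l)).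
  - apply in_seq. unfold K in Hl. lia.
  - destruct (tangency_index (Z.to_nat l)) as [_ ->]; [apply in_seq; unfold K in Hl; lia|].
    rewrite Z2Nat.id by lia. ring.
Qed.

Lemma Qk_ge x : (forall l, (1 <= l <= K - 1)%Z -> / 2 <= Rabs (x - pk k l)) ->
  (/ 4) ^ (k - 1) <= Qk x.
Proof.
  intros H. unfold Qk.
  pose proof (pow_le_prod_list (fun i => (x - (INR i - INR k / 2)) ^ 2) (seq 1 (k - 1)) (/ 4))
    as Hprod.
  rewrite length_seq in Hprod. apply Hprod; [lra|].
  intros i Hi. destruct (tangency_index i Hi) as [Hl ->].
  specialize (H _ Hl). rewrite <- Rsqr_pow2, Rsqr_abs.
  replace (/ 4) with (Rsqr (/ 2)) by (unfold Rsqr; field).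
  apply Rsqr_incr_1; [assumption | lra | apply Rabs_pos].
Qed.

Lemma Qk_le x : - a <= x <= a -> Qk x <= (INR k ^ 2) ^ (k - 1).
Proof.
  intros Hx. unfold Qk.
  pose proof (prod_list_le_pow (fun i => (x - (INR i - INR k / 2)) ^ 2) (seq 1 (k - 1))
                (INR k ^ 2)) as Hprod.
  rewrite length_seq in Hprod. apply Hprod. intros i Hi. destruct (tangency_index i Hi) as [Hl ->].
  split; [apply pow2_ge_0|].
  pose proof (tangency_range _ Hl). pose proof INR_k_ge2. unfold a, r1k in *. nra.
Qed.

Definition Pk_bound : R := a ^ 2 * (INR k ^ 2) ^ (k - 1).
Definition Pk_mid_bound : R := (/ 4) ^ (k - 1).

Lemma Pk_neg_outside x : x < - a \/ a < x -> Pk k x < 0.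
Proof.
  intros Hx. rewrite Pk_factor. pose proof a_ge_half.
  assert (0 < Qk x) by (apply Qk_pos; intros l Hl E; pose proof (tangency_range l Hl); lra).
  assert (a ^ 2 - x ^ 2 < 0) by nra. nra.
Qed.

Lemma Pk_nonneg_iff x : 0 <= Pk k x <-> - a <= x <= a.
Proof.
  split; intros Hx.
  - destruct (Rlt_le_dec x (- a)), (Rlt_le_dec a x);
      try (pose proof (Pk_neg_outside x ltac:(tauto)); lra). lra.
  - rewrite Pk_factor. apply Rmult_le_pos; [nra | apply Qk_nonneg].
Qed.

Lemma Pk_pos_column c x : pk k c < x < pk k c + 1 -> - a < x < a -> 0 < Pk k x.
Proof.
  intros Hc Hx. rewrite Pk_factor. apply Rmult_lt_0_compat; [nra|].
  apply Qk_pos. intros l _. apply (pk_column_not_tangency c l x Hc).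
Qed.

Lemma Pk_tangency l : (1 <= l <= K - 1)%Z -> Pk k (pk k l) = 0.
Proof. intros Hl. rewrite Pk_factor, Qk_tangency by assumption. ring. Qed.

Lemma Pk_right_end : Pk k a = 0.
Proof. rewrite Pk_factor. ring. Qed.

Lemma Pk_left_end : Pk k (- a) = 0.
Proof. rewrite Pk_factor. ring. Qed.

Lemma Pk_le_bound x : - a <= x <= a -> Pk k x <= Pk_bound.
Proof.
  intros Hx. rewrite Pk_factor. unfold Pk_bound.
  apply Rmult_le_compat; [nra | apply Qk_nonneg | nra | apply Qk_le, Hx].
Qed.

Lemma Pk_mid j : (1 <= j <= K - 2)%Z -> Pk_mid_bound <= Pk k (pk k j + / 2).
Proof.
  intros Hj. rewrite Pk_factor. unfold Pk_mid_bound.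
  assert (H1 : 1 <= a ^ 2 - (pk k j + / 2) ^ 2).
  { pose proof (tangency_range j ltac:(lia)). pose proof (tangency_range (j + 1) ltac:(lia)).
    rewrite pk_succ in *. pose proof a_ge_half. nra. }
  assert (H2 : (/ 4) ^ (k - 1) <= Qk (pk k j + / 2)).
  { apply Qk_ge. intros l Hl. unfold pk. rewrite <- Rabs_Ropp.
    destruct (Z_le_gt_dec l j) as [Hle|Hgt].
    - apply IZR_le in Hle. rewrite Rabs_left1; lra.
    - assert (Hgt' : IZR (j + 1) <= IZR l) by (apply IZR_le; lia).
      rewrite plus_IZR in Hgt'. rewrite Rabs_pos_eq; lra. }
  assert (0 <= (/ 4) ^ (k - 1)) by (apply pow_le; lra). nra.
Qed.

Lemma Pk_mid_bound_range : 0 < Pk_mid_bound <= / 4.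
Proof.
  unfold Pk_mid_bound. split; [apply pow_lt; lra|].
  replace (k - 1)%nat with (S (k - 2)) by lia. simpl.
  assert ((/ 4) ^ (k - 2) <= 1) by (rewrite <- (pow1 (k - 2)); apply pow_incr; lra).
  assert (0 <= (/ 4) ^ (k - 2)) by (apply pow_le; lra). nra.
Qed.

Lemma Pk_bound_nonneg : 0 <= Pk_bound.
Proof. unfold Pk_bound. apply Rmult_le_pos; [apply pow2_ge_0 | apply pow_le, pow2_ge_0]. Qed.


Lemma inner_column_range j : (1 <= j <= K - 2)%Z -> - a < pk k j /\ pk k j + 1 < a.
Proof.
  intros Hj. pose proof (tangency_range j ltac:(lia)).
  pose proof (tangency_range (j + 1) ltac:(lia)).
  rewrite pk_succ in *. lra.
Qed.

Definition valid_fin (n : Z) : Prop := (0 <= n <= 2 * K - 3)%Z.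

(* [cell_fin n] runs through the closure of I_n in unit time, from one tangency point to the
   next; the end cells 0 and 2k-3 turn around at the roots -a and a of P_k. *)
Definition cell_fin (n : Z) (th : R) : pt :=
  if Z.eqb n 0 then
    (if Rle_dec th (/ 2) then (pk k 1 - th, - Pk k (pk k 1 - th))
     else (pk k 1 - 1 + th, Pk k (pk k 1 - 1 + th)))
  else if Z.eqb n (2 * K - 3) then
    (if Rle_dec th (/ 2) then (pk k (K - 1) + th, Pk k (pk k (K - 1) + th))
     else (pk k (K - 1) + 1 - th, - Pk k (pk k (K - 1) + 1 - th)))
  else if Z.eqb (n mod 2) 0 then (pk k (n / 2 + 1) - th, - Pk k (pk k (n / 2 + 1) - th))
  else (pk k (n / 2 + 1) + th, Pk k (pk k (n / 2 + 1) + th)).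

Lemma cell_fin_up j th : (1 <= j <= K - 2)%Z ->
  cell_fin (2 * j - 1) th = (pk k j + th, Pk k (pk k j + th)).
Proof.
  intros Hj. unfold cell_fin. replace (2 * j - 1)%Z with (2 * (j - 1) + 1)%Z by lia.
  destruct (Z_div_mod_2 (j - 1) 1 ltac:(lia)) as [-> ->].
  destruct (Z.eqb_spec (2 * (j - 1) + 1) 0), (Z.eqb_spec (2 * (j - 1) + 1) (2 * K - 3)); try lia.
  simpl. replace (j - 1 + 1)%Z with j by lia. reflexivity.
Qed.

Lemma cell_fin_down j th : (1 <= j <= K - 2)%Z ->
  cell_fin (2 * j) th = (pk k (j + 1) - th, - Pk k (pk k (j + 1) - th)).
Proof.
  intros Hj. unfold cell_fin. rewrite <- (Z.add_0_r (2 * j)).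
  destruct (Z_div_mod_2 j 0 ltac:(lia)) as [-> ->].
  destruct (Z.eqb_spec (2 * j + 0) 0), (Z.eqb_spec (2 * j + 0) (2 * K - 3)); try lia.
  reflexivity.
Qed.

Lemma cell_fin_first_down th : th <= / 2 -> cell_fin 0 th = (pk k 1 - th, - Pk k (pk k 1 - th)).
Proof. intros H. unfold cell_fin. simpl. destruct (Rle_dec th (/ 2)); [reflexivity | lra]. Qed.

Lemma cell_fin_first_up th : / 2 <= th ->
  cell_fin 0 th = (pk k 1 - 1 + th, Pk k (pk k 1 - 1 + th)).
Proof.
  intros H. unfold cell_fin. simpl. destruct (Rle_dec th (/ 2)); [|reflexivity].
  replace th with (/ 2) by lra. rewrite pk_1.
  replace (- a + / 2 - / 2) with (- a) by lra. replace (- a + / 2 - 1 + / 2) with (- a) by lra.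
  rewrite Pk_left_end, Ropp_0. reflexivity.
Qed.

Lemma cell_fin_last_up th : th <= / 2 ->
  cell_fin (2 * K - 3) th = (pk k (K - 1) + th, Pk k (pk k (K - 1) + th)).
Proof.
  intros H. pose proof K_ge2. unfold cell_fin.
  destruct (Z.eqb_spec (2 * K - 3) 0); [lia|]. rewrite Z.eqb_refl.
  destruct (Rle_dec th (/ 2)); [reflexivity | lra].
Qed.

Lemma cell_fin_last_down th : / 2 <= th ->
  cell_fin (2 * K - 3) th = (pk k (K - 1) + 1 - th, - Pk k (pk k (K - 1) + 1 - th)).
Proof.
  intros H. pose proof K_ge2. unfold cell_fin.
  destruct (Z.eqb_spec (2 * K - 3) 0); [lia|]. rewrite Z.eqb_refl.
  destruct (Rle_dec th (/ 2)); [|reflexivity].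
  replace th with (/ 2) by lra. rewrite pk_last.
  replace (a - / 2 + / 2) with a by lra. replace (a - / 2 + 1 - / 2) with a by lra.
  rewrite Pk_right_end, Ropp_0. reflexivity.
Qed.

Lemma valid_fin_cases n : valid_fin n ->
  n = 0%Z \/ n = (2 * K - 3)%Z \/
  (exists j, (1 <= j <= K - 2)%Z /\ (n = 2 * j - 1 \/ n = 2 * j)%Z).
Proof.
  intros Hn. destruct (Z.eq_dec n 0) as [|H0]; [left; assumption|].
  destruct (Z.eq_dec n (2 * K - 3)) as [|H1]; [right; left; assumption|].
  right; right. exists ((n + 1) / 2)%Z. unfold valid_fin in Hn. Z.div_mod_to_equations. lia.
Qed.

Lemma tangency_fin l y : (1 <= l <= K - 1)%Z -> y = Pk k (pk k l) \/ y = - Pk k (pk k l) ->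
  tangency (Psetk k) (pk k l, y).
Proof.
  intros Hl Hy. rewrite Pk_tangency in Hy by assumption. replace y with 0 by lra.
  exists (pk k l). split; [exists l; split; [assumption | reflexivity] | reflexivity].
Qed.

Lemma fin_cell_interior n th : valid_fin n -> 0 < th < 1 -> Ik k n (cell_fin n th).
Proof.
  intros Hn Hth. pose proof K_ge2. pose proof a_ge_half. pose proof pk_1. pose proof pk_last.
  unfold Ik. fold K. rewrite r0k_eq. fold a.
  destruct (valid_fin_cases n Hn) as [->|[->|[j [Hj [-> | ->]]]]].
  - left. split; [reflexivity|]. destruct (Rle_dec th (/ 2)).
    + rewrite cell_fin_first_down by assumption. simpl. split; [lra | right; reflexivity].
    + rewrite cell_fin_first_up by lra. simpl. split; [lra | left; reflexivity].
  - right; left. split; [reflexivity|]. destruct (Rle_dec th (/ 2)).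
    + rewrite cell_fin_last_up by assumption. simpl. split; [lra | left; reflexivity].
    + rewrite cell_fin_last_down by lra. simpl. split; [lra | right; reflexivity].
  - right; right; left. exists j. rewrite cell_fin_up, pk_succ by assumption. simpl.
    split; [assumption|]. split; [reflexivity|]. split; [lra | reflexivity].
  - right; right; right. exists j. rewrite cell_fin_down, pk_succ by assumption. simpl.
    split; [assumption|]. split; [reflexivity|]. split; [lra | reflexivity].
Qed.

Lemma fin_cell_ends n : valid_fin n ->
  tangency (Psetk k) (cell_fin n 0) /\ tangency (Psetk k) (cell_fin n 1).
Proof.
  intros Hn. pose proof K_ge2.
  destruct (valid_fin_cases n Hn) as [->|[->|[j [Hj [-> | ->]]]]].
  - rewrite cell_fin_first_down, cell_fin_first_up by lra. rewrite Rminus_0_r.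
    replace (pk k 1 - 1 + 1) with (pk k 1) by ring.
    split; apply tangency_fin; auto; lia.
  - rewrite cell_fin_last_up, cell_fin_last_down by lra. rewrite Rplus_0_r.
    replace (pk k (K - 1) + 1 - 1) with (pk k (K - 1)) by ring.
    split; apply tangency_fin; auto; lia.
  - rewrite !cell_fin_up by assumption. rewrite Rplus_0_r, <- pk_succ.
    split; apply tangency_fin; auto; lia.
  - rewrite !cell_fin_down by assumption. rewrite Rminus_0_r.
    replace (pk k (j + 1) - 1) with (pk k j) by (rewrite pk_succ; ring).
    split; apply tangency_fin; auto; lia.
Qed.

Lemma Ik_column n z : Ik k n z ->
  exists c, pk k c <= fst z < pk k c + 1 /\
   ((c = 0 /\ n = 0)%Z \/ ((c = K - 1 /\ n = 2 * K - 3)%Z /\ pk k c < fst z) \/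
    ((1 <= c <= K - 2)%Z /\ pk k c < fst z /\
      ((n = 2 * c - 1)%Z /\ snd z = Pk k (fst z) \/ (n = 2 * c)%Z /\ snd z = - Pk k (fst z)))).
Proof.
  pose proof pk_0. pose proof pk_1. pose proof pk_last.
  unfold Ik. fold K. rewrite r0k_eq. fold a.
  intros [[En [Hx Hy]]|[[En [Hx Hy]]|[[j [Hj [En [Hx Hy]]]]|[j [Hj [En [Hx Hy]]]]]]].
  - exists 0%Z. split; [lra | left; split; [reflexivity | assumption]].
  - exists (K - 1)%Z. split; [lra | right; left; split; [split; [reflexivity | assumption] | lra]].
  - exists j. rewrite pk_succ in Hx. split; [lra|]. right; right.
    split; [assumption|]. split; [lra|]. left. split; assumption.
  - exists j. rewrite pk_succ in Hx. split; [lra|]. right; right.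
    split; [assumption|]. split; [lra|]. right. split; assumption.
Qed.

Lemma fin_arc_not_tangency n z : Ik k n z -> ~ tangency (Psetk k) z.
Proof.
  intros HI [x [[l [Hl ->]] ->]].
  destruct (Ik_column n _ HI) as [c [Hc Hcase]]. cbn [fst snd] in Hc, Hcase.
  assert (c = l) as -> by (apply (pk_column_unique c l (pk k l)); [assumption | lra]).
  destruct Hcase as [[E _]|[[_ Hlt]|[_ [Hlt _]]]]; [lia | lra | lra].
Qed.

Lemma fin_arcs_disjoint n m z : Ik k n z -> Ik k m z -> n = m.
Proof.
  intros H1 H2.
  destruct (Ik_column n _ H1) as [c [Hc C1]], (Ik_column m _ H2) as [c' [Hc' C2]].
  assert (c = c') as <- by (apply (pk_column_unique c c' (fst z)); assumption).
  destruct C1 as [[E1 E2]|[[[E1 E2] _]|[Hj [Hlt [[E2 Y1]|[E2 Y1]]]]]],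
    C2 as [[E1' E2']|[[[E1' E2'] _]|[Hj' [Hlt' [[E2' Y2]|[E2' Y2]]]]]]; try lia;
    pose proof (inner_column_range c Hj);
    pose proof (Pk_pos_column c (fst z) ltac:(lra) ltac:(lra)); lra.
Qed.

Lemma Lamk_on_graph z : Lamk k z <-> on_graph (Pk k) z.
Proof. unfold Lamk, on_graph. rewrite Pk_nonneg_iff, r0k_eq. reflexivity. Qed.

Lemma fin_tangency_Lam z : tangency (Psetk k) z -> Lamk k z.
Proof.
  intros [x [[l [Hl ->]] ->]]. apply Lamk_on_graph. unfold on_graph. simpl.
  rewrite Pk_tangency by assumption. split; [lra | left; reflexivity].
Qed.

Local Notation fin_traj := (global_traj (pm_field (Derive (Pk k)) 1) (pm_field (Derive (Pk k)) (-1))).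

Lemma fin_bounce_right g t1 : fin_traj g -> g t1 = (a, 0) ->
  forall s, 0 <= s <= / 2 -> g (t1 + s) = (a - s, - Pk k (a - s)).
Proof.
  intros Hg Hg1. pose proof pk_last. pose proof a_ge_half.
  destruct (traj_heads _ g Hg t1) as [Hh|Hh].
  - exfalso. apply (blocked_right _ _ Pk_derive g t1 a (proj1 Hg) Hh Hg1 Pk_right_end).
    intros x Hx. apply Pk_neg_outside. right; assumption.
  - apply (follow_left _ _ Pk_derive g t1 a (/ 2) Hg Hh).
    + rewrite Hg1, Pk_right_end, Ropp_0. reflexivity.
    + intros s Hs. apply (Pk_pos_column (K - 1)); lra.
Qed.

Lemma fin_bounce_left g t1 : fin_traj g -> g t1 = (- a, 0) ->
  forall s, 0 <= s <= / 2 -> g (t1 + s) = (- a + s, Pk k (- a + s)).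
Proof.
  intros Hg Hg1. pose proof pk_0. pose proof a_ge_half.
  destruct (traj_heads _ g Hg t1) as [Hh|Hh].
  - apply (follow_right _ _ Pk_derive g t1 (- a) (/ 2) Hg Hh).
    + rewrite Hg1, Pk_left_end. reflexivity.
    + intros s Hs. apply (Pk_pos_column 0); lra.
  - exfalso. apply (blocked_left _ _ Pk_derive g t1 (- a) (proj1 Hg) Hh Hg1 Pk_left_end).
    intros x Hx. apply Pk_neg_outside. left; assumption.
Qed.

Lemma fin_last_cell g t0 : fin_traj g -> heads (Derive (Pk k)) 1 g t0 -> g t0 = (pk k (K - 1), 0) ->
  forall th, 0 <= th <= 1 -> g (t0 + th) = cell_fin (2 * K - 3) th.
Proof.
  intros Hg Hh Hg0. pose proof pk_last. pose proof a_ge_half. pose proof K_ge2.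
  assert (Hup : forall s, 0 <= s <= / 2 ->
                  g (t0 + s) = (pk k (K - 1) + s, Pk k (pk k (K - 1) + s))).
  { apply (follow_right _ _ Pk_derive g t0 _ (/ 2) Hg Hh).
    - rewrite Hg0, Pk_tangency by lia. reflexivity.
    - intros s Hs. apply (Pk_pos_column (K - 1)); lra. }
  assert (Hturn : g (t0 + / 2) = (a, 0)).
  { rewrite Hup by lra. replace (pk k (K - 1) + / 2) with a by lra.
    rewrite Pk_right_end. reflexivity. }
  intros th Hth. destruct (Rle_dec th (/ 2)).
  - rewrite cell_fin_last_up by assumption. apply Hup. lra.
  - rewrite cell_fin_last_down, (fun_eq g _ (t0 + / 2 + (th - / 2))) by (lra || ring).
    rewrite (fin_bounce_right g _ Hg Hturn) by lra.
    replace (pk k (K - 1) + 1 - th) with (a - (th - / 2)) by lra. reflexivity.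
Qed.

Lemma fin_first_cell g t0 : fin_traj g -> heads (Derive (Pk k)) (-1) g t0 -> g t0 = (pk k 1, 0) ->
  forall th, 0 <= th <= 1 -> g (t0 + th) = cell_fin 0 th.
Proof.
  intros Hg Hh Hg0. pose proof pk_1. pose proof pk_0. pose proof a_ge_half. pose proof K_ge2.
  assert (Hdown : forall s, 0 <= s <= / 2 -> g (t0 + s) = (pk k 1 - s, - Pk k (pk k 1 - s))).
  { apply (follow_left _ _ Pk_derive g t0 _ (/ 2) Hg Hh).
    - rewrite Hg0, Pk_tangency, Ropp_0 by lia. reflexivity.
    - intros s Hs. apply (Pk_pos_column 0); lra. }
  assert (Hturn : g (t0 + / 2) = (- a, 0)).
  { rewrite Hdown by lra. replace (pk k 1 - / 2) with (- a) by lra.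
    rewrite Pk_left_end, Ropp_0. reflexivity. }
  intros th Hth. destruct (Rle_dec th (/ 2)).
  - rewrite cell_fin_first_down by assumption. apply Hdown. lra.
  - rewrite cell_fin_first_up, (fun_eq g _ (t0 + / 2 + (th - / 2))) by (lra || ring).
    rewrite (fin_bounce_left g _ Hg Hturn) by lra.
    replace (pk k 1 - 1 + th) with (- a + (th - / 2)) by lra. reflexivity.
Qed.

Lemma fin_tangency_cell g : Omega (Xk k) (Yk k) (Lamk k) g ->
  forall t0, tangency (Psetk k) (g t0) ->
  exists n, valid_fin n /\ forall th, 0 <= th <= 1 -> g (t0 + th) = cell_fin n th.
Proof.
  intros [Hg _] t0 [x [[l [Hl ->]] Hg0]]. fold K in Hl. unfold valid_fin.
  assert (HP : Pk k (pk k l) = 0) by (apply Pk_tangency; assumption).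
  destruct (traj_heads _ g Hg t0) as [Hh|Hh].
  - destruct (Z.eq_dec l (K - 1)) as [->|Hne].
    { exists (2 * K - 3)%Z. split; [lia|]. apply fin_last_cell; assumption. }
    exists (2 * l - 1)%Z. split; [lia|]. intros th Hth. rewrite cell_fin_up by lia.
    pose proof (inner_column_range l ltac:(lia)).
    apply (follow_right _ _ Pk_derive g t0 _ 1 Hg Hh); [| |exact Hth].
    + rewrite Hg0, HP. reflexivity.
    + intros s Hs. apply (Pk_pos_column l); lra.
  - destruct (Z.eq_dec l 1) as [->|Hne].
    { exists 0%Z. split; [lia|]. apply fin_first_cell; assumption. }
    exists (2 * (l - 1))%Z. split; [lia|]. intros th Hth. rewrite cell_fin_down by lia.
    replace (l - 1 + 1)%Z with l by lia.
    assert (Hl1 : pk k l = pk k (l - 1) + 1) by (rewrite <- pk_succ; f_equal; lia).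
    pose proof (inner_column_range (l - 1) ltac:(lia)).
    apply (follow_left _ _ Pk_derive g t0 _ 1 Hg Hh); [| |exact Hth].
    + rewrite Hg0, HP, Ropp_0. reflexivity.
    + intros s Hs. apply (Pk_pos_column (l - 1)); lra.
Qed.

(* Moving right from inside column c, the next tangency comes after time p_(c+1) - u; in the
   last column this includes the bounce at a, which takes the same time. *)
Lemma fin_reach_right g T0 c u : fin_traj g -> heads (Derive (Pk k)) 1 g T0 ->
  g T0 = (u, Pk k u) -> (0 <= c <= K - 1)%Z -> pk k c < u < pk k c + 1 -> - a <= u < a ->
  tangency (Psetk k) (g (T0 + (pk k c + 1 - u))).
Proof.
  intros Hg Hh Hg0 Hc Hcu Hu. pose proof pk_last.
  destruct (Z.eq_dec c (K - 1)) as [->|Hne].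
  - assert (Hturn : g (T0 + (a - u)) = (a, 0)).
    { rewrite (follow_right _ _ Pk_derive g T0 u (a - u) Hg Hh Hg0);
        [| intros s Hs; apply (Pk_pos_column (K - 1)); lra | lra].
      replace (u + (a - u)) with a by ring. rewrite Pk_right_end. reflexivity. }
    rewrite (fun_eq g _ (T0 + (a - u) + / 2)) by lra.
    rewrite (fin_bounce_right g _ Hg Hturn) by lra.
    replace (a - / 2) with (pk k (K - 1)) by lra. apply tangency_fin; [lia | right; reflexivity].
  - pose proof (pk_le (c + 1) (K - 1) ltac:(lia)). rewrite pk_succ in *.
    rewrite (follow_right _ _ Pk_derive g T0 u (pk k c + 1 - u) Hg Hh Hg0);
      [| intros s Hs; apply (Pk_pos_column c); lra | lra].
    replace (u + (pk k c + 1 - u)) with (pk k (c + 1)) by (rewrite pk_succ; ring).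
    apply tangency_fin; [lia | left; reflexivity].
Qed.

Lemma fin_reach_left g T0 c u : fin_traj g -> heads (Derive (Pk k)) (-1) g T0 ->
  g T0 = (u, - Pk k u) -> (0 <= c <= K - 1)%Z -> pk k c < u < pk k c + 1 -> - a < u <= a ->
  tangency (Psetk k) (g (T0 + (u - pk k c))).
Proof.
  intros Hg Hh Hg0 Hc Hcu Hu. pose proof pk_0.
  destruct (Z.eq_dec c 0) as [->|Hne].
  - assert (Hturn : g (T0 + (u + a)) = (- a, 0)).
    { rewrite (follow_left _ _ Pk_derive g T0 u (u + a) Hg Hh Hg0);
        [| intros s Hs; apply (Pk_pos_column 0); lra | lra].
      replace (u - (u + a)) with (- a) by ring. rewrite Pk_left_end, Ropp_0. reflexivity. }
    rewrite (fun_eq g _ (T0 + (u + a) + / 2)) by lra.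
    rewrite (fin_bounce_left g _ Hg Hturn) by lra.
    replace (- a + / 2) with (pk k 1) by (rewrite pk_1; ring).
    apply tangency_fin; [lia | left; reflexivity].
  - pose proof (pk_le 1 c ltac:(lia)). pose proof pk_1.
    rewrite (follow_left _ _ Pk_derive g T0 u (u - pk k c) Hg Hh Hg0);
      [| intros s Hs; apply (Pk_pos_column c); lra | lra].
    replace (u - (u - pk k c)) with (pk k c) by ring.
    apply tangency_fin; [lia | right; reflexivity].
Qed.

Lemma point_column u : - a <= u <= a -> exists c, (0 <= c <= K - 1)%Z /\ pk k c <= u < pk k c + 1.
Proof.
  intros Hu. pose proof pk_0. pose proof pk_last. exists (Int_part (u + INR k / 2)).
  destruct (base_Int_part (u + INR k / 2)) as [Hc1 Hc2].
  assert (Hcu : pk k (Int_part (u + INR k / 2)) <= u < pk k (Int_part (u + INR k / 2)) + 1)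
    by (unfold pk; lra).
  split; [|exact Hcu]. split; apply Z.nlt_ge; intros Hlt.
  - pose proof (pk_le (Int_part (u + INR k / 2) + 1) 0 ltac:(lia)). rewrite pk_succ in *. lra.
  - pose proof (pk_le (K - 1 + 1) (Int_part (u + INR k / 2)) ltac:(lia)).
    rewrite pk_succ in *. lra.
Qed.

Lemma fin_tangency_within_unit g : Omega (Xk k) (Yk k) (Lamk k) g -> forall T0,
  exists t, T0 <= t <= T0 + 1 /\ tangency (Psetk k) (g t).
Proof.
  intros [Hg HL] T0. pose proof pk_0. pose proof pk_last.
  destruct (traj_on_graph _ _ Pk_derive g Hg (proj1 (Lamk_on_graph _) HL) T0) as [Hu Hv].
  apply Pk_nonneg_iff in Hu.
  set (u := fst (g T0)) in *. set (v := snd (g T0)) in *.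
  assert (Eg : g T0 = (u, v)) by apply surjective_pairing.
  destruct (point_column u Hu) as [c [Hc Hcu]].
  destruct (Req_dec u (pk k c)) as [Euc|Nuc].
  { assert (Hc1' : (1 <= c)%Z).
    { apply Z.nlt_ge. intros Hlt. assert (c = 0%Z) as Ec by lia. rewrite Ec, pk_0 in Euc. lra. }
    exists T0. split; [lra|]. rewrite Eg, Euc. apply tangency_fin; [lia|].
    rewrite <- Euc. assumption. }
  assert (Hcu' : pk k c < u < pk k c + 1) by lra.
  destruct (traj_heads _ g Hg T0) as [Hh|Hh];
    pose proof (heads_sign _ _ _ _ Hh) as Hs; fold v in Hs.
  - destruct (Req_dec u a) as [Ea|Na].
    { exfalso. apply (blocked_right _ _ Pk_derive g T0 a (proj1 Hg) Hh); [| exact Pk_right_end |].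
      - rewrite Eg, Ea. f_equal. rewrite Ea, Pk_right_end in Hv. lra.
      - intros x Hx. apply Pk_neg_outside. right; assumption. }
    exists (T0 + (pk k c + 1 - u)). split; [lra|].
    apply fin_reach_right; [assumption | assumption | | assumption | lra | lra].
    rewrite Eg. f_equal. pose proof (proj2 (Pk_nonneg_iff u) Hu). lra.
  - destruct (Req_dec u (- a)) as [Ea|Na].
    { exfalso. apply (blocked_left _ _ Pk_derive g T0 (- a) (proj1 Hg) Hh); [| exact Pk_left_end |].
      - rewrite Eg, Ea. f_equal. rewrite Ea, Pk_left_end in Hv. lra.
      - intros x Hx. apply Pk_neg_outside. left; assumption. }
    exists (T0 + (u - pk k c)). split; [lra|].
    apply fin_reach_left; [assumption | assumption | | assumption | lra | lra].
    rewrite Eg. f_equal. pose proof (proj2 (Pk_nonneg_iff u) Hu). lra.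
Qed.

Definition cell_shape (n c : Z) (lx : R) : Prop :=
  (0 <= c <= K - 1)%Z /\ (n = 2 * c - 1 \/ n = 2 * c)%Z /\
  lx <= pk k c + / 2 /\ cell_set cell_fin n (lx, 0) /\
  forall z, cell_set cell_fin n z -> pk k c <= fst z <= pk k c + 1 /\ - a <= fst z <= a /\
    (snd z = Pk k (fst z) \/ snd z = - Pk k (fst z)).

Lemma cell_shape_exists n : valid_fin n -> exists c lx, cell_shape n c lx.
Proof.
  intros Hn. pose proof K_ge2. pose proof a_ge_half. pose proof pk_0. pose proof pk_1.
  pose proof pk_last.
  destruct (valid_fin_cases n Hn) as [->|[->|[j [Hj Hnj]]]].
  - exists 0%Z, (- a). split; [lia|]. split; [right; lia|]. split; [lra|]. split.
    + exists (/ 2). split; [lra|]. rewrite cell_fin_first_down by lra.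
      replace (pk k 1 - / 2) with (- a) by lra. rewrite Pk_left_end, Ropp_0. reflexivity.
    + intros z [th [Hth ->]]. destruct (Rle_dec th (/ 2)).
      * rewrite cell_fin_first_down by assumption. cbn [fst snd].
        split; [lra|]. split; [lra | right; reflexivity].
      * rewrite cell_fin_first_up by lra. cbn [fst snd].
        split; [lra|]. split; [lra | left; reflexivity].
  - exists (K - 1)%Z, (pk k (K - 1)). split; [lia|]. split; [left; lia|]. split; [lra|]. split.
    + exists 0. split; [lra|]. rewrite cell_fin_last_up, Rplus_0_r, Pk_tangency by (lra || lia).
      reflexivity.
    + intros z [th [Hth ->]]. destruct (Rle_dec th (/ 2)).
      * rewrite cell_fin_last_up by assumption. cbn [fst snd].
        split; [lra|]. split; [lra | left; reflexivity].
      * rewrite cell_fin_last_down by lra. cbn [fst snd].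
        split; [lra|]. split; [lra | right; reflexivity].
  - pose proof (inner_column_range j Hj). exists j, (pk k j).
    split; [lia|]. split; [exact Hnj|]. split; [lra|]. split; destruct Hnj as [-> | ->].
    + exists 0. split; [lra|]. rewrite cell_fin_up, Rplus_0_r, Pk_tangency by lia. reflexivity.
    + exists 1. split; [lra|]. rewrite cell_fin_down, pk_succ by lia.
      replace (pk k j + 1 - 1) with (pk k j) by ring. rewrite Pk_tangency, Ropp_0 by lia.
      reflexivity.
    + intros z [th [Hth ->]]. rewrite cell_fin_up by lia. cbn [fst snd].
      split; [lra|]. split; [lra | left; reflexivity].
    + intros z [th [Hth ->]]. rewrite cell_fin_down, pk_succ by lia. cbn [fst snd].
      split; [lra|]. split; [lra | right; reflexivity].
Qed.

Lemma cell_shape_diam n c lx m c' lx' : cell_shape n c lx -> cell_shape m c' lx' ->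
  forall p q, cell_set cell_fin n p -> cell_set cell_fin m q -> edist p q <= 2 * a + 2 * Pk_bound.
Proof.
  intros [_ [_ [_ [_ Hn]]]] [_ [_ [_ [_ Hm]]]] p q Hp Hq.
  destruct (Hn p Hp) as [_ [Hp1 Hp2]], (Hm q Hq) as [_ [Hq1 Hq2]].
  pose proof (Pk_le_bound _ Hp1). pose proof (Pk_le_bound _ Hq1).
  pose proof (proj2 (Pk_nonneg_iff _) Hp1). pose proof (proj2 (Pk_nonneg_iff _) Hq1).
  eapply Rle_trans; [apply edist_le_l1|].
  assert (Rabs (fst p - fst q) <= 2 * a) by (apply Rabs_le; lra).
  assert (Rabs (snd p - snd q) <= 2 * Pk_bound) by (apply Rabs_le; destruct Hp2, Hq2; lra).
  lra.
Qed.

Lemma cell_shape_hdist_columns n c lx m c' lx' : cell_shape n c lx -> cell_shape m c' lx' ->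
  (c < c')%Z -> / 2 <= hdist (cell_set cell_fin n) (cell_set cell_fin m).
Proof.
  intros Hn Hm Hlt. pose proof Hn as [_ [_ [Hlx [Hl _]]]]. pose proof Hm as [_ [_ [_ [Hl' Hin']]]].
  refine (hdist_ge _ _ _ _ _ _ Hl Hl' _ (cell_shape_diam _ _ _ _ _ _ Hn Hm)).
  intros b Hb. destruct (Hin' b Hb) as [[Hb1 _] _].
  pose proof (pk_le (c + 1) c' ltac:(lia)). rewrite pk_succ in *.
  eapply Rle_trans; [|apply edist_fst]. cbn [fst]. rewrite Rabs_left1; lra.
Qed.

Lemma fin_hdist_same_column j : (1 <= j <= K - 2)%Z ->
  Pk_mid_bound <= hdist (cell_set cell_fin (2 * j - 1)) (cell_set cell_fin (2 * j)).
Proof.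
  intros Hj. pose proof (inner_column_range j Hj).
  destruct (cell_shape_exists (2 * j - 1)) as [c [lx Hn]]; [unfold valid_fin; lia|].
  destruct (cell_shape_exists (2 * j)) as [c' [lx' Hm]]; [unfold valid_fin; lia|].
  assert (Hmid : cell_set cell_fin (2 * j - 1) (pk k j + / 2, Pk k (pk k j + / 2))).
  { exists (/ 2). split; [lra|]. rewrite cell_fin_up by assumption. reflexivity. }
  refine (hdist_ge _ _ _ _ _ _ Hmid (proj1 (proj2 (proj2 (proj2 Hm)))) _
            (cell_shape_diam _ _ _ _ _ _ Hn Hm)).
  intros b [th [Hth ->]]. rewrite cell_fin_down by assumption.
  eapply Rle_trans; [|apply edist_snd]. cbn [fst snd].
  pose proof (Pk_mid j Hj). pose proof Pk_mid_bound_range. rewrite pk_succ.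
  pose proof (proj2 (Pk_nonneg_iff (pk k j + 1 - th)) ltac:(lra)).
  rewrite Rabs_pos_eq; lra.
Qed.

Lemma fin_cell_hdist n m : valid_fin n -> valid_fin m ->
  Pk_mid_bound / IZR (2 * K - 3) * IZR (Z.abs (n - m)) <=
    hdist (cell_set cell_fin n) (cell_set cell_fin m) <=
  (2 * a + 2 * Pk_bound) * IZR (Z.abs (n - m)).
Proof.
  intros Hn Hm. pose proof K_ge2. pose proof a_ge_half. pose proof Pk_bound_nonneg.
  pose proof Pk_mid_bound_range.
  assert (HK : 1 <= IZR (2 * K - 3)) by (apply IZR_le; lia).
  destruct (Z.eq_dec n m) as [<-|Hne].
  { rewrite hdist_refl, Z.sub_diag. simpl. lra. }
  assert (Hd1 : 1 <= IZR (Z.abs (n - m))) by (apply IZR_le; lia).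
  assert (Hd2 : IZR (Z.abs (n - m)) <= IZR (2 * K - 3))
    by (apply IZR_le; unfold valid_fin in *; lia).
  destruct (cell_shape_exists n Hn) as [c [lx Sn]], (cell_shape_exists m Hm) as [c' [lx' Sm]].
  split.
  - assert (Hlow : Pk_mid_bound <= hdist (cell_set cell_fin n) (cell_set cell_fin m)).
    { destruct (Z.lt_total c c') as [Hlt|[<-|Hgt]].
      - pose proof (cell_shape_hdist_columns _ _ _ _ _ _ Sn Sm Hlt). lra.
      - destruct Sn as [_ [Hcn _]], Sm as [_ [Hcm _]].
        assert (1 <= c <= K - 2)%Z by (unfold valid_fin in *; lia).
        destruct Hcn as [-> | ->], Hcm as [-> | ->]; try lia;
          [|rewrite hdist_sym]; apply fin_hdist_same_column; assumption.
      - pose proof (cell_shape_hdist_columns _ _ _ _ _ _ Sm Sn Hgt). rewrite hdist_sym. lra. }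
    apply (Rle_trans _ (Pk_mid_bound * 1)); [|lra].
    unfold Rdiv. rewrite Rmult_assoc. apply Rmult_le_compat_l; [lra|].
    apply (Rmult_le_reg_l (IZR (2 * K - 3))); [lra|].
    rewrite <- Rmult_assoc, Rinv_r, Rmult_1_l; lra.
  - apply (Rle_trans _ ((2 * a + 2 * Pk_bound) * 1)); [|apply Rmult_le_compat_l; lra].
    rewrite Rmult_1_r. apply hdist_le_diam; [lra | exists (lx, 0) | exists (lx', 0) |].
    + apply Sn.
    + apply Sm.
    + exact (cell_shape_diam _ _ _ _ _ _ Sn Sm).
Qed.

Theorem fin_itinerary_homeo : itinerary_homeo (Xk k) (Yk k) (Lamk k) (Ik k) (Psetk k) (targetk k).
Proof.
  pose proof K_ge2. pose proof a_ge_half. pose proof Pk_bound_nonneg. pose proof Pk_mid_bound_range.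
  assert (HK : 1 <= IZR (2 * K - 3)) by (apply IZR_le; lia).
  pose proof (itin_valid _ _ _ _ _ _ _ fin_tangency_cell fin_tangency_within_unit fin_cell_interior
                fin_cell_ends fin_arc_not_tangency fin_arcs_disjoint) as Hvalid.
  apply (itinerary_homeo_of_bounds _ _ _ _ _ _ _ fin_tangency_cell fin_tangency_within_unit
           fin_cell_interior fin_cell_ends fin_arc_not_tangency fin_arcs_disjoint fin_tangency_Lam
           (targetk k) (Pk_mid_bound / IZR (2 * K - 3)) (2 * a + 2 * Pk_bound)).
  - apply Rdiv_lt_0_compat; lra.
  - lra.
  - exact fin_cell_hdist.
  - intros g1 g2 G1 G2. apply (ex_zfold_linear_weighted _ (IZR (2 * K - 3)) 0); [lra | lra|].
    intros j. pose proof (Hvalid g1 G1 j). pose proof (Hvalid g2 G2 j). unfold valid_fin in *.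
    rewrite Rmult_0_l, Rplus_0_r. split; apply IZR_le; lia.
  - intros g Hg j. exact (Hvalid g Hg j).
Qed.

End FiniteCase.

Theorem mainTheorem14 :
  (forall k : nat, (2 <= k)%nat ->
     itinerary_homeo (Xk k) (Yk k) (Lamk k) (Ik k) (Psetk k) (targetk k))
  /\ itinerary_homeo Xinf Yinf Laminf Iinf Psetinf Thetainf.
Proof. split; [exact fin_itinerary_homeo | exact inf_itinerary_homeo]. Qed.
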